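(* Consider the pay-to-bid game described in the context with $n\ge 2$ players, and consider any symmetric subgame perfect equilibrium (SSPE), both in the version with re-entry and in the version without re-entry. Then: (I) In both versions, in any subgame starting at round $t\in\{1,2,3,\dots\}$, the equilibrium expected utility of a player $i$ whose wealth at the start of round $t$ is $w_{i,t}$ equals exactly $u(w_{i,t})$. (II) With re-entry, in every round each player strictly randomizes over $\{\text{Bid},\text{No Bid}\}$ and plays Bid with the stationary probability $$p = 1-\left(\frac{u(c)}{u(v-s)}\right)^{1/(n-1)};$$ the SSPE is unique and stationary. (III) Without re-entry, in every round $t$ each active player strictly randomizes over $\{\text{Bid},\text{No Bid}\}$ and plays Bid with probability $$p_t = 1-\left(\frac{u(c)}{u(v-s)}\right)^{1/(n_t-1)},$$ where $n_t$ is the number of active players in round $t$; the SSPE is unique and Markov perfect (it depends on the history only through $n_t$, besides the constants $v,s,c$).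
   Context: Pay-to-bid game: an object has monetary value $v>0$ that is common knowledge; there are $n\ge 2$ players; the bid fee is $c>0$ and the fixed sale price is $s\ge 0$, with $c<v-s$. Play proceeds in rounds $t=1,2,3,\dots$ with complete information (all past actions are observed). In each round every active player simultaneously chooses an action in $\{\text{Bid},\text{No Bid}\}$. Each time a player plays Bid she immediately pays $c$ to the seller. If exactly one active player bids in a round, she wins the object (receiving value $v$), pays the sale price $s$, and the game ends. If two or more players bid, the game continues to the next round. If no active player bids, the round is replayed (players resubmit their actions). With re-entry, all $n$ original players are active in every round regardless of history. Without re-entry, the active players in round $t+1$ are exactly those who played Bid in round $t$; $n_t$ denotes the number of active players in round $t$ ($n_1=n$). Players do not discount; each player's payoff is $u$ evaluated at her final wealth, where $u(x)=\frac{1-e^{-\rho x}}{\rho}$ with a constant $\rho<0$ (constant absolute risk-loving utility), or $u(x)=x$ in the risk-neutral case $\rho=0$. A player's wealth at the start of round $t$ is her initial wealth plus all gains minus all fees paid so far. A (behavioral) strategy maps each history to a probability of playing Bid; a symmetric subgame perfect equilibrium is a subgame perfect equilibrium in which all players use the same strategy. *)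

From Stdlib Require Import Reals Lra Lia List Arith.
Import ListNotations.
Open Scope R_scope.

(** * Pay-to-bid game (common value v, bid fee c, sale price s, n players) *)

Definition u (rho x : R) : R :=
  if Req_EM_T rho 0 then x else (1 - exp (- rho * x)) / rho.

(** An action profile of one stage: a list of length n of booleans;
    entry j is true iff player j plays Bid.  A history is the list of all
    (non-terminal) action profiles played so far, oldest first.  Stages in
    which nobody bids ("replays") are recorded in the history as well. *)
Definition profile := list bool.
Definition hist := list profile.

Definition nbids (a : profile) : nat := count_occ Bool.bool_dec a true.

Fixpoint profiles (n : nat) : list profile :=
  match n with
  | O => [ [] ]
  | S m => map (cons true) (profiles m) ++ map (cons false) (profiles m)
  end.

(** Update of the active set after a non-terminal stage with profile a.
    re = true : with re-entry (everybody always active).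
    re = false: without re-entry; if >= 2 players bid, exactly the bidders
    stay active; if nobody bids, the round is replayed with the same
    active set. *)
Definition next_active (re : bool) (act : list bool) (a : profile) : list bool :=
  if re then act else if (2 <=? nbids a)%nat then a else act.

Definition active (re : bool) (n : nat) (h : hist) : list bool :=
  fold_left (next_active re) h (repeat true n).

Definition nactive (re : bool) (n : nat) (h : hist) : nat :=
  nbids (active re n h).

Fixpoint valid_from (re : bool) (n : nat) (act : list bool) (h : hist) : Prop :=
  match h with
  | [] => True
  | a :: h' =>
      length a = n /\ nbids a <> 1%nat /\
      (forall j, nth j a false = true -> nth j act false = true) /\
      valid_from re n (next_active re act a) h'
  end.

Definition valid_hist (re : bool) (n : nat) (h : hist) : Prop :=
  valid_from re n (repeat true n) h.

Definition nbids_of (i : nat) (h : hist) : nat :=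
  length (filter (fun a : profile => nth i a false) h).

Definition wealth (c : R) (w0 : nat -> R) (i : nat) (h : hist) : R :=
  w0 i - c * INR (nbids_of i h).

(** Strategy profiles: sigma j h = probability that player j plays Bid
    after history h (behavioral strategies). *)
Definition strat_profile := nat -> hist -> R.

Definition is_strategy (tau : hist -> R) : Prop := forall h, 0 <= tau h <= 1.

Fixpoint prof_prob (j : nat) (act : list bool) (q : nat -> R) (a : profile) : R :=
  match act, a with
  | x :: act', b :: a' =>
      (if x then (if b then q j else 1 - q j) else (if b then 0 else 1))
      * prof_prob (S j) act' q a'
  | _, _ => 1
  end.

Definition sumR {A} (f : A -> R) (l : list A) : R :=
  fold_right (fun x acc => f x + acc) 0 l.

(** Expected utility of player i in the game truncated after K further
    stages, starting at history h, when the game is stopped at the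
    truncation point every player gets u of her current wealth.  A stage
    with exactly one bidder ends the game: the winner pays c and s and
    receives v. *)
Fixpoint tval (re : bool) (rho c v s : R) (n : nat) (w0 : nat -> R)
    (sigma : strat_profile) (i : nat) (K : nat) (h : hist) : R :=
  match K with
  | O => u rho (wealth c w0 i h)
  | S K' =>
      sumR (fun a : profile =>
        prof_prob 0 (active re n h) (fun j => sigma j h) a *
        (if (nbids a =? 1)%nat
         then u rho (wealth c w0 i h
                     + (if nth i a false then v - s - c else 0))
         else tval re rho c v s n w0 sigma i K' (h ++ [a])))
        (profiles n)
  end.

(** Extended reals {-oo} U R, needed since in the risk-neutral case a
    never-ending play has payoff -oo. *)
Inductive ER := Fin (r : R) | NegInf.

Definition ER_le (x y : ER) : Prop :=
  match x, y with
  | NegInf, _ => True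
  | Fin _, NegInf => False
  | Fin a, Fin b => a <= b
  end.

Definition conv_to (T : nat -> R) (x : ER) : Prop :=
  match x with
  | Fin L => Un_cv T L
  | NegInf => forall M, exists N, forall k, (N <= k)%nat -> T k < M
  end.

(** Expected utility of player i from history h under sigma equals x:
    the limit of the truncated expected utilities. *)
Definition has_value (re : bool) (rho c v s : R) (n : nat) (w0 : nat -> R)
    (sigma : strat_profile) (i : nat) (h : hist) (x : ER) : Prop :=
  conv_to (fun K => tval re rho c v s n w0 sigma i K h) x.

Definition deviate (sigma : strat_profile) (i : nat) (d : hist -> R) : strat_profile :=
  fun j => if (j =? i)%nat then d else sigma j.

Definition SSPE (re : bool) (rho c v s : R) (n : nat) (w0 : nat -> R)
    (tau : hist -> R) : Prop :=
  is_strategy tau /\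
  forall h, valid_hist re n h ->
  forall i, (i < n)%nat ->
  forall d, is_strategy d ->
  forall x y,
    has_value re rho c v s n w0 (deviate (fun _ => tau) i d) i h x ->
    has_value re rho c v s n w0 (fun _ => tau) i h y ->
    ER_le x y.

Definition pstar (rho c v s : R) (m : nat) : R :=
  1 - Rpower (u rho c / u rho (v - s)) (1 / INR (m - 1)).

From Stdlib Require Import Reals List.
From Stdlib Require Import Lra Lia Classical ClassicalEpsilon.
Import ListNotations.
Open Scope R_scope.

(** Write [E w = exp (- rho w)], so that [u (w + y) = u w + E w * u y], and
    measure every value [V] of a player with wealth [w] by its normalized gain
    [(V - u w) / E w].

    If all opponents bid with [pstar m] ([m] active players),
      a sure bidder wins with probability [u c / u (v - s)], which makes her
      expected utility after one stage equal to her current utility; by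
      induction every truncated value equals [u (W i h)], whatever she does,
      so the candidate is an SSPE ([candidate_SSPE]).
    - Uniqueness.  In an SSPE, values exist ([tval_converges]) and gains lie in
      [[0, u (v - s)]]; all gains of a history sum to at most [u (v - s - c)]
      ([surplus_bound]).  Decomposing a gain into the gains of bidding and of
      passing ([gain_decomposition]) and bounding both in terms of a bound
      [M] on all gains yields a strict contraction ([contraction]), so the
      supremum of all gains is [0] ([gains_vanish]).  Zero gains then force
      strict mixing with the indifference probability [pstar]
      ([equilibrium_strategy]). *)

(** * Finite sums over lists *)

Lemma sumR_app {A} (f : A -> R) l1 l2 : sumR f (l1 ++ l2) = sumR f l1 + sumR f l2.
Proof. induction l1; simpl; [ring | rewrite IHl1; ring]. Qed.

Lemma sumR_map {A B} (f : B -> R) (g : A -> B) l :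
  sumR f (map g l) = sumR (fun x => f (g x)) l.
Proof. induction l; simpl; [ring | rewrite IHl; ring]. Qed.

Lemma sumR_plus {A} (f g : A -> R) l : sumR (fun x => f x + g x) l = sumR f l + sumR g l.
Proof. induction l; simpl; [ring | rewrite IHl; ring]. Qed.

Lemma sumR_scal {A} (k : R) (f : A -> R) l : sumR (fun x => k * f x) l = k * sumR f l.
Proof. induction l; simpl; [ring | rewrite IHl; ring]. Qed.

Lemma sumR_const0 {A} (l : list A) : sumR (fun _ => 0) l = 0.
Proof. induction l; simpl; [ring | rewrite IHl; ring]. Qed.

Lemma sumR_ext {A} (f g : A -> R) l :
  (forall x, In x l -> f x = g x) -> sumR f l = sumR g l.
Proof. induction l; simpl; intros H; [ring |]. rewrite H, IHl; auto. Qed.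

Lemma sumR_le {A} (f g : A -> R) l :
  (forall x, In x l -> f x <= g x) -> sumR f l <= sumR g l.
Proof.
  induction l; simpl; intros H; [lra |].
  pose proof (H a (or_introl eq_refl)).
  pose proof (IHl (fun x Hx => H x (or_intror Hx))). lra.
Qed.

Lemma sumR_swap {A B} (f : A -> B -> R) l1 l2 :
  sumR (fun x => sumR (fun y => f x y) l2) l1 = sumR (fun y => sumR (fun x => f x y) l1) l2.
Proof.
  induction l1; simpl.
  - rewrite sumR_const0; auto.
  - rewrite IHl1, <- sumR_plus. reflexivity.
Qed.

Lemma sumR_ge_term {A} (f : A -> R) l y :
  (forall x, In x l -> 0 <= f x) -> In y l -> f y <= sumR f l.
Proof.
  induction l as [|z l IH]; intros H Hy; [destruct Hy |]. simpl.
  destruct Hy as [<- | Hy].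
  - assert (0 <= sumR f l); [| lra].
    rewrite <- (sumR_const0 l). apply sumR_le. intros; apply H; right; auto.
  - pose proof (H z (or_introl eq_refl)).
    pose proof (IH (fun x Hx => H x (or_intror Hx)) Hy). lra.
Qed.

Lemma sumR_ge_two_terms {A} (f : A -> R) l x y :
  (forall z, In z l -> 0 <= f z) -> x <> y -> In x l -> In y l -> f x + f y <= sumR f l.
Proof.
  induction l as [|z l IH]; intros H Hxy Hx Hy; [destruct Hx |]. simpl.
  assert (H' : forall w, In w l -> 0 <= f w) by (intros; apply H; right; auto).
  destruct Hx as [<- | Hx]; destruct Hy as [<- | Hy]; try congruence.
  - pose proof (sumR_ge_term f l y H' Hy). lra.
  - pose proof (sumR_ge_term f l x H' Hx). lra.
  - pose proof (IH H' Hxy Hx Hy). pose proof (H z (or_introl eq_refl)). lra.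
Qed.

(** * Limits of real sequences *)

Lemma cv_const k : Un_cv (fun _ => k) k.
Proof. intros e He. exists 0%nat. intros. unfold R_dist. rewrite Rminus_diag, Rabs_R0; auto. Qed.

Lemma cv_sumR {X} (F : nat -> X -> R) (L : X -> R) l :
  (forall x, In x l -> Un_cv (fun K => F K x) (L x)) ->
  Un_cv (fun K => sumR (F K) l) (sumR L l).
Proof.
  induction l as [|x l IH]; intros H; simpl.
  - apply cv_const.
  - apply CV_plus; [apply H; left; auto | apply IH; intros; apply H; right; auto].
Qed.

Lemma cv_shift1 T L : Un_cv (fun K => T (S K)) L -> Un_cv T L.
Proof.
  intros H. apply (CV_shift T 1).
  apply (Un_cv_ext (fun K => T (S K))); auto. intros; f_equal; lia.
Qed.

Lemma cv_le_const T L b : Un_cv T L -> (forall K, T K <= b) -> L <= b.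
Proof. intros H Hb. eapply Rle_cv_lim; [exact Hb | exact H | apply cv_const]. Qed.

Lemma conv_to_const T L x : (forall K, T K = L) -> conv_to T x -> x = Fin L.
Proof.
  intros HT. destruct x as [L' |]; simpl; intros H.
  - f_equal. apply (UL_sequence T); auto.
    apply (Un_cv_ext (fun _ => L)); [intros; auto | apply cv_const].
  - destruct (H L) as [N HN]. specialize (HN N (le_n _)). rewrite HT in HN; lra.
Qed.

(** A sequence whose increments are dominated by [B] times the decrements of a
    non-negative non-increasing sequence converges in [{-oo} U R]: [T + B * Sv]
    is non-increasing, and [Sv] converges. *)
Lemma conv_of_dominated_increments (T Sv : nat -> R) (B : R) : 0 <= B ->
  (forall K, 0 <= Sv K) -> (forall K, Sv (S K) <= Sv K) ->
  (forall K, T (S K) - T K <= B * (Sv K - Sv (S K))) ->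
  exists x, conv_to T x.
Proof.
  intros HB HS0 HS HT.
  set (Z := fun K => T K + B * Sv K).
  assert (HZ : forall K, Z (S K) <= Z K) by (intros K; unfold Z; specialize (HT K); lra).
  assert (HZle : forall N k, (N <= k)%nat -> Z k <= Z N).
  { intros N k Hk. induction Hk; [lra |]. specialize (HZ m); lra. }
  destruct (decreasing_cv Sv HS) as [Ls HLs].
  { exists 0. intros x [i ->]. unfold opp_seq. specialize (HS0 i); lra. }
  destruct (classic (exists m, forall K, m <= Z K)) as [[m Hm] | Hn].
  - destruct (decreasing_cv Z HZ) as [Lz HLz].
    { exists (-m). intros x [i ->]. unfold opp_seq. specialize (Hm i); lra. }
    exists (Fin (Lz - B * Ls)). simpl.
    apply (Un_cv_ext (fun K => Z K - B * Sv K)); [intros; unfold Z; ring |].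
    apply CV_minus; auto. apply CV_mult; auto. apply cv_const.
  - exists NegInf. simpl. intros M.
    destruct (classic (exists N, Z N < M)) as [[N HN] | HN].
    + exists N. intros k Hk. pose proof (HZle N k Hk).
      assert (T k <= Z k) by (unfold Z; specialize (HS0 k); nra). lra.
    + exfalso; apply Hn. exists M. intros K. apply Rnot_lt_le. intro; apply HN; eauto.
Qed.

(** * Action profiles of one stage *)

Lemma nbids_t a : nbids (true :: a) = S (nbids a). Proof. reflexivity. Qed.
Lemma nbids_f a : nbids (false :: a) = nbids a. Proof. reflexivity. Qed.

Lemma nbids_le_length a : (nbids a <= length a)%nat.
Proof. induction a as [|b a IH]; simpl; auto. destruct b; [rewrite nbids_t | rewrite nbids_f]; lia. Qed.

Lemma nbids_repeat m : nbids (repeat true m) = m.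
Proof. induction m; auto. change (repeat true (S m)) with (true :: repeat true m). rewrite nbids_t; auto. Qed.

Lemma exists_true_entry act : (1 <= nbids act)%nat ->
  exists j, (j < length act)%nat /\ nth j act false = true.
Proof.
  induction act as [|b act IH]; intros H; [change (nbids []) with 0%nat in H; lia |].
  destruct b.
  - exists 0%nat. split; [simpl; lia | reflexivity].
  - rewrite nbids_f in H. destruct (IH H) as [j [H1 H2]]. exists (S j); simpl; split; auto; lia.
Qed.

Lemma exists_two_true_entries act : (2 <= nbids act)%nat ->
  exists j1 j2, j1 <> j2 /\ (j1 < length act)%nat /\ (j2 < length act)%nat /\
    nth j1 act false = true /\ nth j2 act false = true.
Proof.
  induction act as [|b act IH]; intros H; [change (nbids []) with 0%nat in H; lia |].
  destruct b.
  - rewrite nbids_t in H. destruct (exists_true_entry act ltac:(lia)) as [j [H1 H2]].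
    exists 0%nat, (S j). simpl. repeat split; auto; lia.
  - rewrite nbids_f in H. destruct (IH H) as [j1 [j2 [H1 [H2 [H3 [H4 H5]]]]]].
    exists (S j1), (S j2). simpl. repeat split; auto; lia.
Qed.

Lemma sumR_bidders a (U : R) :
  sumR (fun j => if nth j a false then U else 0) (seq 0 (length a)) = INR (nbids a) * U.
Proof.
  induction a as [|b a IH]; simpl; [ring |].
  rewrite <- seq_shift, sumR_map. simpl. rewrite IH.
  destruct b; [rewrite nbids_t, S_INR | rewrite nbids_f]; ring.
Qed.

Lemma profiles_length m a : In a (profiles m) -> length a = m.
Proof.
  revert a; induction m; simpl; intros a H.
  - destruct H as [<- | []]; reflexivity.
  - apply in_app_or in H; destruct H as [H | H]; apply in_map_iff in H;
      destruct H as [a' [<- H]]; simpl; rewrite (IHm a' H); reflexivity.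
Qed.

(** * The distribution of a stage profile

    [prof_prob j act q] is the law of the profile when the player at position
    [k] of [act] bids with probability [q (j + k)] if active and never bids if
    inactive.  [Ex j act q F] is the expectation of [F] under this law. *)

Definition factor (x b : bool) (r : R) : R :=
  if x then (if b then r else 1 - r) else (if b then 0 else 1).

Definition Ex j act q (F : profile -> R) : R :=
  sumR (fun a => prof_prob j act q a * F a) (profiles (length act)).

Definition probs_ok (q : nat -> R) := forall k, 0 <= q k <= 1.

Lemma prob_nonneg act j q a : probs_ok q -> 0 <= prof_prob j act q a.
Proof.
  intros Hq. revert j a; induction act as [|x act IH]; intros j a; destruct a as [|b a];
    simpl; try lra.
  apply Rmult_le_pos; [| apply IH]. destruct x, b; specialize (Hq j); lra.
Qed.

Lemma prob_ext_ge act j q q' a : (forall k, (j <= k)%nat -> q k = q' k) ->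
  prof_prob j act q a = prof_prob j act q' a.
Proof.
  revert j a; induction act as [|x act IH]; intros j a H; destruct a as [|b a]; simpl; auto.
  rewrite H by lia. rewrite (IH (S j)); auto. intros; apply H; lia.
Qed.

Lemma Ex_cons j x act q F : Ex j (x :: act) q F =
  factor x true (q j) * Ex (S j) act q (fun a => F (true :: a)) +
  factor x false (q j) * Ex (S j) act q (fun a => F (false :: a)).
Proof.
  unfold Ex. simpl length. simpl profiles.
  rewrite sumR_app, !sumR_map, <- !sumR_scal.
  f_equal; apply sumR_ext; intros a _; simpl; unfold factor; ring.
Qed.

Lemma Ex_nil j q F : Ex j [] q F = F [].
Proof. unfold Ex; simpl; ring. Qed.

Lemma Ex_ext j act q F G : (forall a, F a = G a) -> Ex j act q F = Ex j act q G.
Proof. intros H; unfold Ex; apply sumR_ext; intros; rewrite H; auto. Qed.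

Lemma Ex_lin j act q F G al be :
  Ex j act q (fun a => al * F a + be * G a) = al * Ex j act q F + be * Ex j act q G.
Proof. unfold Ex. rewrite <- !sumR_scal, <- sumR_plus. apply sumR_ext; intros; ring. Qed.

Lemma Ex_scal j act q k F : Ex j act q (fun a => k * F a) = k * Ex j act q F.
Proof. unfold Ex. rewrite <- sumR_scal. apply sumR_ext; intros; ring. Qed.

Lemma Ex_sub j act q F G : Ex j act q (fun a => F a - G a) = Ex j act q F - Ex j act q G.
Proof.
  rewrite (Ex_ext _ _ _ _ (fun a => 1 * F a + (-1) * G a)) by (intros; ring).
  rewrite Ex_lin. ring.
Qed.

Lemma Ex_const j act q k : Ex j act q (fun _ => k) = k.
Proof.
  revert j; induction act as [|x act IH]; intros j.
  - apply Ex_nil.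
  - rewrite Ex_cons, !IH. destruct x; unfold factor; ring.
Qed.

Lemma Ex_ext_supp j act q F G :
  (forall a, In a (profiles (length act)) -> prof_prob j act q a <> 0 -> F a = G a) ->
  Ex j act q F = Ex j act q G.
Proof.
  intros H; unfold Ex; apply sumR_ext; intros a Ha.
  destruct (Req_dec (prof_prob j act q a) 0) as [E | E]; [rewrite E; ring | rewrite H; auto].
Qed.

Lemma Ex_le j act q F G : probs_ok q ->
  (forall a, In a (profiles (length act)) -> prof_prob j act q a <> 0 -> F a <= G a) ->
  Ex j act q F <= Ex j act q G.
Proof.
  intros Hq H; unfold Ex; apply sumR_le; intros a Ha.
  destruct (Req_dec (prof_prob j act q a) 0) as [E | E]; [rewrite E; lra |].
  apply Rmult_le_compat_l; [apply prob_nonneg; auto | auto].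
Qed.

Lemma Ex_sum_swap j act q (F : nat -> profile -> R) l :
  sumR (fun k => Ex j act q (F k)) l = Ex j act q (fun a => sumR (fun k => F k a) l).
Proof.
  unfold Ex. rewrite sumR_swap. apply sumR_ext. intros a _.
  induction l; simpl; [ring | rewrite IHl; ring].
Qed.

Lemma Ex_cv j act q (F : nat -> profile -> R) L :
  (forall a, In a (profiles (length act)) -> prof_prob j act q a <> 0 ->
     Un_cv (fun K => F K a) (L a)) ->
  Un_cv (fun K => Ex j act q (F K)) (Ex j act q L).
Proof.
  intros H. unfold Ex. apply cv_sumR. intros a Ha.
  destruct (Req_dec (prof_prob j act q a) 0) as [E | E].
  - rewrite E. apply (Un_cv_ext (fun _ => 0)); [intros; ring |].
    rewrite Rmult_0_l. apply cv_const.
  - apply CV_mult; [apply cv_const | auto].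
Qed.

Definition upd (q : nat -> R) (i : nat) (x : R) : nat -> R :=
  fun j => if Nat.eqb j i then x else q j.

Lemma upd_eq q i x : upd q i x i = x.
Proof. unfold upd; rewrite Nat.eqb_refl; auto. Qed.

Lemma upd_neq q i x k : k <> i -> upd q i x k = q k.
Proof. intros H; unfold upd. apply Nat.eqb_neq in H; rewrite H; auto. Qed.

Lemma probs_ok_upd q i x : probs_ok q -> 0 <= x <= 1 -> probs_ok (upd q i x).
Proof. intros H Hx k. unfold upd. destruct (k =? i)%nat; auto. Qed.

Lemma prob_split act j q a i :
  prof_prob j act q a =
  q i * prof_prob j act (upd q i 1) a + (1 - q i) * prof_prob j act (upd q i 0) a.
Proof.
  revert j a; induction act as [|x act IH]; intros j a; destruct a as [|b a]; simpl; try ring.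
  destruct (Nat.eqb_spec j i) as [-> | Ej].
  - rewrite (prob_ext_ge act (S i) (upd q i 1) q), (prob_ext_ge act (S i) (upd q i 0) q).
    2, 3: intros k Hk; apply upd_neq; lia.
    rewrite !upd_eq. destruct x, b; ring.
  - rewrite (IH (S j) a), !upd_neq by auto. ring.
Qed.

Lemma Ex_split j act q F i :
  Ex j act q F = q i * Ex j act (upd q i 1) F + (1 - q i) * Ex j act (upd q i 0) F.
Proof.
  unfold Ex. rewrite <- !sumR_scal, <- sumR_plus. apply sumR_ext; intros a _.
  rewrite (prob_split act j q a i). ring.
Qed.

Lemma supp_bidder act j q a k : length a = length act ->
  prof_prob j act q a <> 0 -> nth k a false = true ->
  nth k act false = true /\ q (j + k)%nat <> 0.
Proof.
  revert j a k; induction act as [|x act IH]; intros j a k Hl Hp Hk;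
    destruct a as [|b a]; simpl in Hl; try discriminate.
  - destruct k; discriminate.
  - simpl in Hp. destruct k as [|k]; simpl in Hk |- *.
    + subst b. rewrite Nat.add_0_r. destruct x.
      * split; auto. intro E; rewrite E in Hp; apply Hp; ring.
      * exfalso; apply Hp; ring.
    + assert (Hp' : prof_prob (S j) act q a <> 0) by (intro E; rewrite E in Hp; apply Hp; ring).
      replace (j + S k)%nat with (S j + k)%nat by lia. exact (IH (S j) a k ltac:(lia) Hp' Hk).
Qed.

Lemma supp_nonbidder act j q a k : length a = length act ->
  prof_prob j act q a <> 0 -> nth k a false = false ->
  nth k act false = true -> q (j + k)%nat <> 1.
Proof.
  revert j a k; induction act as [|x act IH]; intros j a k Hl Hp Hk Ha;
    destruct a as [|b a]; simpl in Hl; try discriminate.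
  - destruct k; discriminate.
  - simpl in Hp. destruct k as [|k]; simpl in Hk, Ha |- *.
    + subst b x. rewrite Nat.add_0_r. intro E; rewrite E in Hp; apply Hp; ring.
    + assert (Hp' : prof_prob (S j) act q a <> 0) by (intro E; rewrite E in Hp; apply Hp; ring).
      replace (j + S k)%nat with (S j + k)%nat by lia. eauto.
Qed.

Lemma supp_upd1 act q a i : length a = length act -> nth i act false = true ->
  prof_prob 0 act (upd q i 1) a <> 0 -> nth i a false = true.
Proof.
  intros Hl Ha Hp. destruct (nth i a false) eqn:E; auto.
  exfalso; apply (supp_nonbidder act 0 (upd q i 1) a i Hl Hp E Ha). apply upd_eq.
Qed.

Lemma supp_upd0 act q a i : length a = length act ->
  prof_prob 0 act (upd q i 0) a <> 0 -> nth i a false = false.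
Proof.
  intros Hl Hp. destruct (nth i a false) eqn:E; auto.
  exfalso; apply (proj2 (supp_bidder act 0 (upd q i 0) a i Hl Hp E)). apply upd_eq.
Qed.

Lemma supp_inactive act q a i : length a = length act -> nth i act false = false ->
  prof_prob 0 act q a <> 0 -> nth i a false = false.
Proof.
  intros Hl Ha Hp. destruct (nth i a false) eqn:E; auto.
  rewrite (proj1 (supp_bidder act 0 q a i Hl Hp E)) in Ha; discriminate.
Qed.

Definition ind0 (a : profile) : R := if Nat.eqb (nbids a) 0 then 1 else 0.
Definition ind1 (a : profile) : R := if Nat.eqb (nbids a) 1 then 1 else 0.

Definition unif j (act : list bool) (q : nat -> R) (p : R) :=
  forall k, nth k act false = true -> q (j + k)%nat = p.

Definition fixat j (act : list bool) (q : nat -> R) i (r p : R) :=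
  nth i act false = true /\ q (j + i)%nat = r /\
  forall k, k <> i -> nth k act false = true -> q (j + k)%nat = p.

Lemma unif_tail j x act q p : unif j (x :: act) q p -> unif (S j) act q p.
Proof. intros H k Hk. replace (S j + k)%nat with (j + S k)%nat by lia. apply H; auto. Qed.

Lemma unif_head j act q p : unif j (true :: act) q p -> q j = p.
Proof. intros H. rewrite <- (Nat.add_0_r j). apply (H 0%nat); reflexivity. Qed.

Lemma fixat_tail j x act q i r p : fixat j (x :: act) q (S i) r p -> fixat (S j) act q i r p.
Proof.
  intros [H1 [H2 H3]]. split; [exact H1 | split].
  - replace (S j + i)%nat with (j + S i)%nat by lia; auto.
  - intros k Hk Ha. replace (S j + k)%nat with (j + S k)%nat by lia. apply H3; auto.
Qed.

Lemma fixat_head j x act q r p : fixat j (x :: act) q 0 r p ->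
  x = true /\ q j = r /\ unif (S j) act q p.
Proof.
  intros [H1 [H2 H3]]. rewrite Nat.add_0_r in H2. repeat split; auto.
  intros k Hk. replace (S j + k)%nat with (j + S k)%nat by lia. apply H3; auto.
Qed.

Lemma fixat_other j act q i r p : fixat j (true :: act) q (S i) r p -> q j = p.
Proof. intros [_ [_ H3]]. rewrite <- (Nat.add_0_r j). apply H3; auto. Qed.

Lemma fixat_nbids j act q i r p : fixat j act q i r p -> (1 <= nbids act)%nat.
Proof.
  intros [H1 _]. revert i H1; induction act as [|x act IH]; intros i H1.
  - destruct i; discriminate.
  - destruct i; simpl in H1.
    + subst; rewrite nbids_t; lia.
    + destruct x; [rewrite nbids_t; lia | rewrite nbids_f; eauto].
Qed.

Lemma fixat_upd act q i r p : nth i act false = true -> (forall k, k <> i -> q k = p) ->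
  fixat 0 act (upd q i r) i r p.
Proof. intros H1 H2. split; auto. split; [apply upd_eq |]. intros k Hk _. rewrite upd_neq; auto. Qed.

Lemma Ex_ind0_cons_true j act q :
  Ex (S j) act q (fun a => ind0 (true :: a)) = 0.
Proof. rewrite (Ex_ext _ _ _ _ (fun _ => 0)) by reflexivity. apply Ex_const. Qed.

Lemma Ex_ind1_cons_true j act q :
  Ex (S j) act q (fun a => ind1 (true :: a)) = Ex (S j) act q ind0.
Proof. apply Ex_ext. intros a. unfold ind1, ind0. rewrite nbids_t. reflexivity. Qed.

Lemma Ex_ind_cons_false j act q (ind : profile -> R) :
  (forall a, ind (false :: a) = ind a) ->
  Ex (S j) act q (fun a => ind (false :: a)) = Ex (S j) act q ind.
Proof. intros H. apply Ex_ext. exact H. Qed.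

Lemma Ex_ind0_unif act j q p : unif j act q p -> Ex j act q ind0 = (1 - p) ^ nbids act.
Proof.
  revert j; induction act as [|x act IH]; intros j H.
  - rewrite Ex_nil; reflexivity.
  - rewrite Ex_cons, Ex_ind0_cons_true, Ex_ind_cons_false, IH by
      (reflexivity || eapply unif_tail; eauto).
    destruct x; unfold factor.
    + rewrite nbids_t, (unif_head _ _ _ _ H). simpl; ring.
    + rewrite nbids_f. ring.
Qed.

Lemma Ex_ind1_unif act j q p : unif j act q p ->
  Ex j act q ind1 = INR (nbids act) * p * (1 - p) ^ pred (nbids act).
Proof.
  revert j; induction act as [|x act IH]; intros j H.
  - rewrite Ex_nil; unfold ind1; simpl; ring.
  - rewrite Ex_cons, Ex_ind1_cons_true, Ex_ind_cons_false, (Ex_ind0_unif _ _ _ p), IH by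
      (reflexivity || eapply unif_tail; eauto).
    destruct x; unfold factor.
    + rewrite nbids_t, (unif_head _ _ _ _ H).
      destruct (nbids act) as [|m]; simpl pred; rewrite ?S_INR; simpl; ring.
    + rewrite nbids_f. ring.
Qed.

Lemma Ex_ind0_fixat act j q i r p : fixat j act q i r p ->
  Ex j act q ind0 = (1 - r) * (1 - p) ^ (nbids act - 1).
Proof.
  revert j i; induction act as [|x act IH]; intros j i H.
  - destruct H as [H _]; destruct i; discriminate.
  - rewrite Ex_cons, Ex_ind0_cons_true, Ex_ind_cons_false by reflexivity.
    destruct i as [|i].
    + destruct (fixat_head _ _ _ _ _ _ H) as [-> [Hq Hu]].
      rewrite (Ex_ind0_unif _ _ _ p Hu), Hq. unfold factor.
      rewrite nbids_t. simpl. rewrite Nat.sub_0_r. ring.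
    + pose proof (fixat_tail _ _ _ _ _ _ _ H) as Ht.
      rewrite (IH _ _ Ht). pose proof (fixat_nbids _ _ _ _ _ _ Ht).
      destruct x; unfold factor.
      * rewrite (fixat_other _ _ _ _ _ _ H), nbids_t.
        replace (S (nbids act) - 1)%nat with (S (nbids act - 1)) by lia. simpl; ring.
      * rewrite nbids_f. ring.
Qed.

Lemma Ex_ind1_fixat act j q i r p : fixat j act q i r p ->
  Ex j act q ind1 = r * (1 - p) ^ (nbids act - 1) +
     (1 - r) * INR (nbids act - 1) * p * (1 - p) ^ pred (nbids act - 1).
Proof.
  revert j i; induction act as [|x act IH]; intros j i H.
  - destruct H as [H _]; destruct i; discriminate.
  - rewrite Ex_cons, Ex_ind1_cons_true, Ex_ind_cons_false by reflexivity.
    destruct i as [|i].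
    + destruct (fixat_head _ _ _ _ _ _ H) as [-> [Hq Hu]].
      rewrite (Ex_ind0_unif _ _ _ p Hu), (Ex_ind1_unif _ _ _ p Hu), Hq. unfold factor.
      rewrite nbids_t. simpl. rewrite Nat.sub_0_r. ring.
    + pose proof (fixat_tail _ _ _ _ _ _ _ H) as Ht.
      rewrite (IH _ _ Ht), (Ex_ind0_fixat _ _ _ _ _ _ Ht). pose proof (fixat_nbids _ _ _ _ _ _ Ht).
      destruct x; unfold factor.
      * rewrite (fixat_other _ _ _ _ _ _ H), nbids_t.
        replace (S (nbids act) - 1)%nat with (S (nbids act - 1)) by lia.
        destruct (nbids act - 1)%nat as [|m]; simpl pred; rewrite ?S_INR; simpl; ring.
      * rewrite nbids_f. ring.
Qed.

Lemma Ex_ind1_bidder act i p : nth i act false = true ->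
  Ex 0 act (upd (fun _ => p) i 1) ind1 = (1 - p) ^ (nbids act - 1).
Proof.
  intros Ha. rewrite (Ex_ind1_fixat act 0 _ i 1 p) by (apply fixat_upd; auto). ring.
Qed.

Lemma Ex_ind1_passer act i p : nth i act false = true ->
  Ex 0 act (upd (fun _ => p) i 0) ind1 =
  INR (nbids act - 1) * p * (1 - p) ^ pred (nbids act - 1).
Proof.
  intros Ha. rewrite (Ex_ind1_fixat act 0 _ i 0 p) by (apply fixat_upd; auto). ring.
Qed.

(** * The CARA utility

    With [E w = exp (- rho w)] one has [u (a + b) = u a + E a * u b]: a wealth
    level [w] rescales utility gains by [E w].  For [rho <= 0], [E] is
    non-decreasing and [u] is strictly increasing. *)

Definition EE (rho x : R) : R := exp (- rho * x).

Lemma EE_pos rho x : 0 < EE rho x.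
Proof. apply exp_pos. Qed.

Lemma EE_add rho a b : EE rho (a + b) = EE rho a * EE rho b.
Proof. unfold EE. rewrite <- exp_plus. f_equal; ring. Qed.

Lemma EE_mono rho x y : rho <= 0 -> x <= y -> EE rho x <= EE rho y.
Proof.
  intros Hr Hxy. unfold EE. destruct (Req_dec rho 0) as [-> | Hr0].
  - replace (-0 * x) with 0 by ring; replace (-0 * y) with 0 by ring; lra.
  - destruct (Req_dec x y) as [-> | E]; [lra |]. left. apply exp_increasing. nra.
Qed.

Lemma EE_neg_le1 rho c : rho <= 0 -> 0 < c -> EE rho (- c) <= 1.
Proof.
  intros Hr Hc. rewrite <- exp_0. unfold EE. destruct (Req_dec rho 0) as [-> | E].
  - replace (-0 * - c) with 0 by ring; lra.
  - left. apply exp_increasing. nra.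
Qed.

Lemma u_add rho a b : u rho (a + b) = u rho a + EE rho a * u rho b.
Proof.
  unfold u, EE. destruct (Req_EM_T rho 0) as [-> | E].
  - replace (-0 * a) with 0 by ring. rewrite exp_0; ring.
  - replace (- rho * (a + b)) with (- rho * a + - rho * b) by ring. rewrite exp_plus. field. auto.
Qed.

Lemma u_0 rho : u rho 0 = 0.
Proof.
  unfold u. destruct (Req_EM_T rho 0); auto.
  replace (- rho * 0) with 0 by ring. rewrite exp_0. field; auto.
Qed.

Lemma u_lt rho x y : rho <= 0 -> x < y -> u rho x < u rho y.
Proof.
  intros Hr Hxy. unfold u. destruct (Req_EM_T rho 0); auto.
  assert (exp (- rho * x) < exp (- rho * y)) by (apply exp_increasing; nra).
  apply Rmult_lt_reg_r with (- rho); [lra |].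
  replace ((1 - exp (- rho * x)) / rho * - rho) with (exp (- rho * x) - 1) by (field; lra).
  replace ((1 - exp (- rho * y)) / rho * - rho) with (exp (- rho * y) - 1) by (field; lra). lra.
Qed.

Lemma u_le rho x y : rho <= 0 -> x <= y -> u rho x <= u rho y.
Proof. intros Hr [H | ->]; [left; apply u_lt; auto | lra]. Qed.

Lemma u_pos rho x : rho <= 0 -> 0 < x -> 0 < u rho x.
Proof. intros. rewrite <- (u_0 rho). apply u_lt; auto. Qed.

Lemma u_neg rho x : rho <= 0 -> x < 0 -> u rho x < 0.
Proof. intros. rewrite <- (u_0 rho). apply u_lt; auto. Qed.

Lemma u_lb rho x : rho < 0 -> 1 / rho < u rho x.
Proof.
  intros Hr. unfold u. destruct (Req_EM_T rho 0); [lra |].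
  pose proof (exp_pos (- rho * x)).
  apply Rmult_lt_reg_r with (- rho); [lra |].
  replace (1 / rho * - rho) with (-1) by (field; lra).
  replace ((1 - exp (- rho * x)) / rho * - rho) with (exp (- rho * x) - 1) by (field; lra). lra.
Qed.

(** [gn rho T w] is the utility [T] measured as a gain over the wealth [w], in
    units of the wealth level: [T = u (w + y)] iff [gn rho T w = u y]. *)

Definition gn rho T w := (T - u rho w) / EE rho w.

Lemma gn_u rho w x : gn rho (u rho (w + x)) w = u rho x.
Proof. unfold gn. rewrite u_add. field. apply Rgt_not_eq, EE_pos. Qed.

Lemma gn_self rho w : gn rho (u rho w) w = 0.
Proof. unfold gn, Rdiv. rewrite Rminus_diag; ring. Qed.

Lemma gn_zero rho T w : gn rho T w = 0 -> T = u rho w.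
Proof.
  unfold gn. intros H. pose proof (EE_pos rho w).
  apply Rmult_eq_compat_r with (r := EE rho w) in H. unfold Rdiv in H.
  rewrite Rmult_assoc, Rinv_l, Rmult_0_l in H by lra. lra.
Qed.

Lemma gn_le rho T T' w : T <= T' -> gn rho T w <= gn rho T' w.
Proof.
  intros. unfold gn, Rdiv.
  apply Rmult_le_compat_r; [left; apply Rinv_0_lt_compat, EE_pos | lra].
Qed.

Lemma gn_Ex j act q F w rho : gn rho (Ex j act q F) w = Ex j act q (fun a => gn rho (F a) w).
Proof.
  unfold gn.
  rewrite (Ex_ext _ _ _ (fun a => (F a - u rho w) / EE rho w)
             (fun a => / EE rho w * F a + (- u rho w / EE rho w) * 1)) by (intros; unfold Rdiv; ring).
  rewrite Ex_lin, Ex_const. unfold Rdiv; ring.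
Qed.

Lemma gn_shift rho T w c : gn rho T w = u rho (- c) + EE rho (- c) * gn rho T (w - c).
Proof.
  unfold gn. replace (w - c) with (w + - c) by ring. rewrite u_add, EE_add.
  field. split; apply Rgt_not_eq, EE_pos.
Qed.

Lemma gn_antimono rho T w w' : rho <= 0 -> w' <= w -> (rho < 0 -> 1 / rho <= T) ->
  gn rho T w <= gn rho T w'.
Proof.
  intros Hr Hw HT. unfold gn. destruct (Req_dec rho 0) as [-> | E].
  - unfold u, EE. destruct (Req_EM_T 0 0); [| lra].
    replace (-0 * w) with 0 by ring; replace (-0 * w') with 0 by ring. rewrite exp_0. lra.
  - assert (Hr' : rho < 0) by lra. specialize (HT Hr').
    assert (K : forall x, (T - u rho x) / EE rho x = (T - 1 / rho) / EE rho x + 1 / rho).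
    { intros x. unfold u, EE. destruct (Req_EM_T rho 0); [lra |].
      field. split; [lra | apply Rgt_not_eq, exp_pos]. }
    rewrite !K. pose proof (EE_mono rho w' w Hr Hw). pose proof (EE_pos rho w').
    assert ((T - 1 / rho) / EE rho w <= (T - 1 / rho) / EE rho w'); [| lra].
    unfold Rdiv. apply Rmult_le_compat_l; [lra |]. apply Rinv_le_contravar; auto.
Qed.

(** * The equilibrium bid probability

    With [x = u c / u (v - s)] in (0,1), [pstar m] is the unique [p] with
    [(1 - p)^(m-1) = x]: the probability that none of the [m - 1] opponents
    bids makes a bidder indifferent. *)

Definition xr rho c v s := u rho c / u rho (v - s).

Lemma xr_bounds rho c v s : 0 < c -> c < v - s -> rho <= 0 -> 0 < xr rho c v s < 1.
Proof.
  intros Hc Hcv Hr. unfold xr.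
  pose proof (u_pos rho c Hr Hc). pose proof (u_lt rho c (v - s) Hr Hcv).
  split; [apply Rdiv_lt_0_compat; lra |].
  apply Rmult_lt_reg_r with (u rho (v - s)); [lra |].
  unfold Rdiv. rewrite Rmult_assoc, Rinv_l by lra. lra.
Qed.

Lemma pstar_pow rho c v s m : 0 < c -> c < v - s -> rho <= 0 -> (2 <= m)%nat ->
  (1 - pstar rho c v s m) ^ (m - 1) = xr rho c v s.
Proof.
  intros Hc Hcv Hr Hm. pose proof (xr_bounds rho c v s Hc Hcv Hr).
  replace (1 - pstar rho c v s m) with (Rpower (xr rho c v s) (1 / INR (m - 1)))
    by (unfold pstar, xr; ring).
  rewrite <- Rpower_pow by (unfold Rpower; apply exp_pos).
  rewrite Rpower_mult. replace (1 / INR (m - 1) * INR (m - 1)) with 1; [apply Rpower_1; lra |].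
  field. apply not_0_INR. lia.
Qed.

Lemma pstar_unique rho c v s m p : (2 <= m)%nat -> 0 < 1 - p ->
  (1 - p) ^ (m - 1) = xr rho c v s -> p = pstar rho c v s m.
Proof.
  intros Hm Hp Hx. unfold pstar. fold (xr rho c v s). rewrite <- Hx.
  rewrite <- Rpower_pow by lra. rewrite Rpower_mult.
  replace (INR (m - 1) * (1 / INR (m - 1))) with 1 by (field; apply not_0_INR; lia).
  rewrite Rpower_1 by lra. ring.
Qed.

Lemma pstar_bounds rho c v s m : 0 < c -> c < v - s -> rho <= 0 -> (2 <= m)%nat ->
  0 < pstar rho c v s m < 1.
Proof.
  intros Hc Hcv Hr Hm. pose proof (xr_bounds rho c v s Hc Hcv Hr).
  assert (0 < 1 / INR (m - 1)) by (apply Rdiv_lt_0_compat; [lra | apply lt_0_INR; lia]).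
  assert (ln (xr rho c v s) < 0) by (rewrite <- ln_1; apply ln_increasing; lra).
  unfold pstar. fold (xr rho c v s). unfold Rpower. split.
  - assert (exp (1 / INR (m - 1) * ln (xr rho c v s)) < 1); [| lra].
    rewrite <- exp_0 at 2. apply exp_increasing.
    rewrite <- (Rmult_0_r (1 / INR (m - 1))). apply Rmult_lt_compat_l; auto.
  - pose proof (exp_pos (1 / INR (m - 1) * ln (xr rho c v s))). lra.
Qed.

(** * Histories *)

Definition WF (n : nat) (h : hist) := Forall (fun a : profile => length a = n) h.

Lemma WF_app n h a : WF n h -> length a = n -> WF n (h ++ [a]).
Proof. intros. unfold WF. apply Forall_app; split; auto. Qed.

Lemma active_app re n h a : active re n (h ++ [a]) = next_active re (active re n h) a.
Proof. unfold active. rewrite fold_left_app. reflexivity. Qed.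

Lemma next_active_inactive re act a i :
  nth i act false = false -> nth i a false = false -> nth i (next_active re act a) false = false.
Proof. intros H1 H2. unfold next_active. destruct re; auto. destruct (2 <=? nbids a)%nat; auto. Qed.

Lemma length_active re n h : WF n h -> length (active re n h) = n.
Proof.
  unfold active. intros H. assert (length (repeat true n) = n) by apply repeat_length.
  revert H0. generalize (repeat true n). induction H; intros act Hl; simpl; auto.
  apply IHForall. unfold next_active. destruct re; auto. destruct (2 <=? nbids x)%nat; auto.
Qed.

Lemma nactive_ge2 re n h : (2 <= n)%nat -> (2 <= nbids (active re n h))%nat.
Proof.
  intros Hn. unfold active.
  assert (2 <= nbids (repeat true n))%nat by (rewrite nbids_repeat; auto).
  revert H. generalize (repeat true n). induction h; intros act H; simpl; auto.
  apply IHh. unfold next_active. destruct re; auto. destruct (Nat.leb_spec 2 (nbids a)); auto.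
Qed.

Lemma nactive_reentry n h : nbids (active true n h) = n.
Proof.
  unfold active. rewrite <- (nbids_repeat n) at 2.
  generalize (repeat true n). induction h; simpl; auto.
Qed.

Lemma wealth_app c w0 i h a :
  wealth c w0 i (h ++ [a]) = wealth c w0 i h - (if nth i a false then c else 0).
Proof.
  unfold wealth, nbids_of. rewrite filter_app, length_app, plus_INR. simpl.
  destruct (nth i a false); simpl; ring.
Qed.

Lemma wealth_app_le c w0 i h a : 0 < c -> wealth c w0 i (h ++ [a]) <= wealth c w0 i h.
Proof. intros. rewrite wealth_app. destruct (nth i a false); lra. Qed.

Lemma valid_WF re n h : valid_hist re n h -> WF n h.
Proof.
  unfold valid_hist. generalize (repeat true n). induction h; intros act H; constructor.
  - destruct H; auto.
  - destruct H as [_ [_ [_ H]]]. eapply IHh; eauto.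
Qed.

Lemma valid_from_app re n act h a : valid_from re n act h ->
  length a = n -> nbids a <> 1%nat ->
  (forall j, nth j a false = true -> nth j (fold_left (next_active re) h act) false = true) ->
  valid_from re n act (h ++ [a]).
Proof.
  revert act; induction h as [|b h IH]; intros act Hv Hl Hn Hj; simpl in *.
  - repeat split; auto.
  - destruct Hv as [H1 [H2 [H3 H4]]]. repeat split; auto.
Qed.

Lemma valid_step re n h a q : valid_hist re n h -> In a (profiles n) -> nbids a <> 1%nat ->
  prof_prob 0 (active re n h) q a <> 0 -> valid_hist re n (h ++ [a]).
Proof.
  intros Hv Ha Hn Hp. apply valid_from_app; auto.
  - apply profiles_length; auto.
  - intros j Hj. change (nth j (active re n h) false = true).
    refine (proj1 (supp_bidder (active re n h) 0 q a j _ Hp Hj)).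
    rewrite length_active by (eapply valid_WF; eauto). apply profiles_length; auto.
Qed.

Lemma In_profiles_active re n h a : WF n h -> In a (profiles (length (active re n h))) ->
  In a (profiles n) /\ length a = n.
Proof. intros H Ha. rewrite length_active in Ha by auto. split; auto. apply profiles_length; auto. Qed.

Lemma length_profile_active re n h a : WF n h -> In a (profiles (length (active re n h))) ->
  length a = length (active re n h).
Proof. intros H Ha. apply profiles_length in Ha. auto. Qed.

Definition probs_all (sigma : strat_profile) := forall j h, 0 <= sigma j h <= 1.

Lemma probs_all_sym (tau : hist -> R) : is_strategy tau -> probs_all (fun _ => tau).
Proof. intros H j h; apply H. Qed.

(** * A contraction inequality

    Fix the normalized prize [U = u (v - s - c) > 0] and fee loss
    [d = u (- c) < 0].  If in some round the chance [(1-p)^k] that none of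
    the [k] opponents bids is small enough for two players to share a total
    gain of at most [U], then an indifferent player's gain is pushed strictly
    below any a priori bound [M] by a fixed amount or a fixed factor. *)

Lemma bernoulli p k : 0 <= p <= 1 -> 1 - INR k * p <= (1 - p) ^ k.
Proof.
  intros Hp. induction k; [simpl; lra |].
  rewrite S_INR. simpl pow. assert (0 <= (1 - p) ^ k) by (apply pow_le; lra).
  assert (0 <= INR k) by apply pos_INR. nra.
Qed.

Lemma mixture_le_left p G gB gN : 0 < p <= 1 ->
  G = p * gB + (1 - p) * gN -> gN <= G -> G <= gB.
Proof.
  intros Hp HG HN. apply Rmult_le_reg_l with p; [lra |].
  assert ((1 - p) * gN <= (1 - p) * G) by (apply Rmult_le_compat_l; lra). lra.
Qed.

Lemma mixture_le_right p G gB gN : 0 <= p < 1 ->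
  G = p * gB + (1 - p) * gN -> gB <= G -> G <= gN.
Proof. intros Hp HG HB. apply (mixture_le_left (1 - p) G gN gB); [lra | lra | auto]. Qed.

Definition pi0 U d := (U / 2 - d) / (U - d).
Definition pi1 U d := - d / (2 * (U - d)).
Definition rho0 U d (nn : nat) := (1 - pi0 U d) / INR nn * pi1 U d.

Lemma pi0_spec U d : d < U -> pi0 U d * (U - d) = U / 2 - d.
Proof. intros. unfold pi0. field. lra. Qed.

Lemma pi1_spec U d : d < U -> pi1 U d * (U - d) = - d / 2.
Proof. intros. unfold pi1. field. lra. Qed.

Lemma rho0_bounds U d nn : 0 < U -> d < 0 -> (1 <= nn)%nat -> 0 < rho0 U d nn < 1.
Proof.
  intros HU Hd Hn. unfold rho0.
  assert (1 <= INR nn) by (change 1 with (INR 1); apply le_INR; auto).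
  pose proof (pi0_spec U d ltac:(lra)). pose proof (pi1_spec U d ltac:(lra)).
  assert (A : 0 < 1 - pi0 U d < 1) by (split; apply Rmult_lt_reg_r with (U - d); lra).
  assert (B : 0 < pi1 U d < 1) by (split; apply Rmult_lt_reg_r with (U - d); lra).
  assert (C : 0 < (1 - pi0 U d) / INR nn <= 1 - pi0 U d).
  { split; [apply Rdiv_lt_0_compat; lra |]. unfold Rdiv.
    rewrite <- (Rmult_1_r (1 - pi0 U d)) at 2. apply Rmult_le_compat_l; [lra |].
    rewrite <- Rinv_1. apply Rinv_le_contravar; lra. }
  split; [apply Rmult_lt_0_compat; lra |]. nra.
Qed.

Lemma bid_prob_lower_bound U d p k nn : d < U -> (1 <= k)%nat -> (k <= nn)%nat ->
  0 <= p <= 1 -> (1 - p) ^ k <= pi0 U d -> (1 - pi0 U d) / INR nn <= p.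
Proof.
  intros HdU Hk Hkn Hp Hpi.
  assert (1 <= INR k) by (change 1 with (INR 1); apply le_INR; auto).
  assert (INR k <= INR nn) by (apply le_INR; auto).
  pose proof (bernoulli p k Hp).
  apply Rmult_le_reg_r with (INR nn); [lra |]. unfold Rdiv.
  rewrite Rmult_assoc, Rinv_l by lra. nra.
Qed.

(** The contraction step: either bidding wins rarely, and the bid gain falls
    by [d/2]; or it wins often, and passing loses the prize with probability at
    least [rho0]. *)
Lemma contraction U d M p G gB gN (k nn : nat) :
  0 < U -> d < 0 -> 0 <= M -> (1 <= k)%nat -> (k <= nn)%nat -> 0 <= p <= 1 ->
  G = p * gB + (1 - p) * gN -> gB <= G -> gN <= G ->
  gB <= (1 - p) ^ k * U + (1 - (1 - p) ^ k) * (d + M) ->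
  gN <= (1 - INR k * p * (1 - p) ^ pred k) * M ->
  2 * ((1 - p) ^ k * U + (1 - (1 - p) ^ k) * d) <= U ->
  G <= M + d / 2 \/ G <= (1 - rho0 U d nn) * M.
Proof.
  intros HU Hd HM Hk Hkn Hp HG HB HN HBu HNu Hs.
  assert (Hkk : k = S (pred k)) by lia.
  set (pi := (1 - p) ^ k) in *.
  assert (Hpi0 : 0 <= pi) by (apply pow_le; lra).
  pose proof (pi0_spec U d ltac:(lra)). pose proof (pi1_spec U d ltac:(lra)).
  assert (Hpi1 : 0 < pi1 U d) by (unfold pi1; apply Rdiv_lt_0_compat; lra).
  assert (Hle0 : pi <= pi0 U d) by (apply Rmult_le_reg_r with (U - d); lra).
  assert (Hpi0lt : pi0 U d < 1) by (apply Rmult_lt_reg_r with (U - d); lra).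
  pose proof (bid_prob_lower_bound U d p k nn ltac:(lra) Hk Hkn Hp Hle0) as Hpm.
  assert (0 < (1 - pi0 U d) / INR nn) by (apply Rdiv_lt_0_compat; [lra | apply lt_0_INR; lia]).
  pose proof (mixture_le_left p G gB gN ltac:(lra) HG HN) as HGB.
  destruct (Rle_dec pi (pi1 U d)) as [Hc | Hc].
  - left. assert (pi * (U - d) <= pi1 U d * (U - d)) by (apply Rmult_le_compat_r; lra). nra.
  - right. apply Rnot_le_lt in Hc.
    assert (Hp1 : p < 1).
    { destruct (Req_dec p 1) as [E | E]; [| lra]. exfalso.
      unfold pi in Hc. rewrite E, Hkk in Hc. simpl in Hc. lra. }
    pose proof (mixture_le_right p G gB gN ltac:(lra) HG HB) as HGN.
    set (pp := (1 - p) ^ pred k) in *.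
    assert (Hpp : pi = pp * (1 - p)) by (unfold pi, pp; rewrite Hkk at 1; simpl; ring).
    assert (Hpp0 : 0 <= pp) by (apply pow_le; lra).
    assert (HINk : 1 <= INR k) by (change 1 with (INR 1); apply le_INR; auto).
    assert (Hr1 : p * pi <= INR k * p * pp).
    { rewrite Hpp. assert (pp * (1 - p) <= pp) by nra.
      assert (p * pp <= INR k * p * pp) by nra. nra. }
    assert (Hr2 : rho0 U d nn <= p * pi) by (unfold rho0; apply Rmult_le_compat; lra).
    assert ((1 - INR k * p * pp) * M <= (1 - rho0 U d nn) * M) by (apply Rmult_le_compat_r; lra).
    lra.
Qed.

Lemma indifference_forces_mixing U d p gB gN (k : nat) :
  0 < U -> d < 0 -> (1 <= k)%nat -> 0 <= p <= 1 ->
  gB = (1 - p) ^ k * U + (1 - (1 - p) ^ k) * d -> gB <= 0 -> gN <= 0 ->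
  p * gB + (1 - p) * gN = 0 ->
  0 < p < 1 /\ gB = 0.
Proof.
  intros HU Hd Hk Hp HgB HB HN Hmix.
  assert (Hp0 : p <> 0).
  { intros ->. rewrite Rminus_0_r, pow1 in HgB. lra. }
  assert (Hp1 : p <> 1).
  { intros ->. replace k with (S (pred k)) in HgB by lia. rewrite Rminus_diag in HgB.
    simpl in HgB. rewrite Rmult_0_l in HgB. lra. }
  assert (0 < p < 1) by lra. split; auto.
  assert (p * gB <= 0) by nra. assert ((1 - p) * gN <= 0) by nra.
  assert (Hz : p * gB = 0) by lra. apply Rmult_integral in Hz. destruct Hz; [lra | auto].
Qed.

(** * The game with fixed parameters *)

Section Game.

Variables (re : bool) (rho c v s : R) (n : nat) (w0 : nat -> R).
Hypotheses (Hc : 0 < c) (Hcv : c < v - s) (Hr : rho <= 0) (Hn : (2 <= n)%nat).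

Local Notation actset h := (active re n h).
Local Notation W i h := (wealth c w0 i h).
Local Notation tv sigma i K h := (tval re rho c v s n w0 sigma i K h).

Definition final_pay (i : nat) (h : hist) (a : profile) : R :=
  u rho (W i h + (if nth i a false then v - s - c else 0)).

Lemma tval_step sigma i K h : WF n h ->
  tv sigma i (S K) h =
  Ex 0 (actset h) (fun j => sigma j h)
     (fun a => if (nbids a =? 1)%nat then final_pay i h a else tv sigma i K (h ++ [a])).
Proof. intros Hw. unfold Ex. rewrite length_active by auto. reflexivity. Qed.

Lemma tval_invariant sigma i (Inv : hist -> Prop) :
  (forall h, Inv h -> WF n h) ->
  (forall h a, Inv h -> In a (profiles n) -> nbids a <> 1%nat ->
     prof_prob 0 (actset h) (fun j => sigma j h) a <> 0 -> Inv (h ++ [a])) ->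
  (forall h, Inv h ->
     Ex 0 (actset h) (fun j => sigma j h)
       (fun a => if (nbids a =? 1)%nat then final_pay i h a else u rho (W i (h ++ [a])))
     = u rho (W i h)) ->
  forall K h, Inv h -> tv sigma i K h = u rho (W i h).
Proof.
  intros Hwf Hcl Hb K. induction K; intros h Hh; [reflexivity |].
  rewrite tval_step, <- (Hb h Hh) by auto. apply Ex_ext_supp. intros a Ha Hp.
  destruct (In_profiles_active re n h a (Hwf h Hh) Ha).
  destruct (Nat.eqb_spec (nbids a) 1); auto.
Qed.

Lemma stage_value_nonbidder i h a : nth i a false = false ->
  (if (nbids a =? 1)%nat then final_pay i h a else u rho (W i (h ++ [a]))) = u rho (W i h).
Proof.
  intros E. unfold final_pay. rewrite wealth_app, E.
  destruct (nbids a =? 1)%nat; f_equal; ring.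
Qed.

Lemma bid_indifference act q i p w :
  nth i act false = true -> (forall k, k <> i -> q k = p) ->
  (1 - p) ^ (nbids act - 1) = xr rho c v s ->
  Ex 0 act (upd q i 1) (fun a => u rho (w + (v - s - c)) * ind1 a + u rho (w - c) * (1 - ind1 a))
  = u rho w.
Proof.
  intros Ha Hq Hp.
  rewrite (Ex_ext _ _ _ _ (fun a => (u rho (w + (v - s - c)) - u rho (w - c)) * ind1 a
                                    + u rho (w - c) * 1)) by (intros; ring).
  rewrite Ex_lin, Ex_const, (Ex_ind1_fixat act 0 (upd q i 1) i 1 p) by (apply fixat_upd; auto).
  replace (1 * (1 - p) ^ (nbids act - 1) + (1 - 1) * INR (nbids act - 1) * p *
           (1 - p) ^ pred (nbids act - 1)) with (xr rho c v s) by (rewrite Hp; ring).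
  replace (w + (v - s - c)) with ((w - c) + (v - s)) by ring.
  rewrite (u_add rho (w - c) (v - s)).
  replace (u rho w) with (u rho (w - c + c)) by (f_equal; ring). rewrite u_add.
  unfold xr. field. apply Rgt_not_eq, u_pos; lra.
Qed.

Lemma candidate_stage_value sigma i h : WF n h ->
  (forall j, j <> i -> sigma j h = pstar rho c v s (nbids (actset h))) ->
  Ex 0 (actset h) (fun j => sigma j h)
    (fun a => if (nbids a =? 1)%nat then final_pay i h a else u rho (W i (h ++ [a])))
  = u rho (W i h).
Proof.
  intros Hw Hs. set (act := actset h). set (q := fun j => sigma j h).
  rewrite <- (Ex_const 0 act q (u rho (W i h))).
  destruct (nth i act false) eqn:Ei.
  - rewrite (Ex_split _ _ _ _ i), (Ex_split 0 act q (fun _ => u rho (W i h)) i), !Ex_const.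
    f_equal; f_equal.
    + rewrite <- (bid_indifference act q i (pstar rho c v s (nbids act)) (W i h)); auto.
      * apply Ex_ext_supp. intros a Ha Hp.
        pose proof (supp_upd1 act q a i (length_profile_active re n h a Hw Ha) Ei Hp) as Ea.
        unfold final_pay, ind1. rewrite wealth_app, Ea.
        destruct (nbids a =? 1)%nat; ring.
      * apply pstar_pow; auto. apply nactive_ge2; auto.
    + rewrite <- (Ex_const 0 act (upd q i 0) (u rho (W i h))).
      apply Ex_ext_supp. intros a Ha Hp.
      apply stage_value_nonbidder, (supp_upd0 act q a i (length_profile_active re n h a Hw Ha) Hp).
  - apply Ex_ext_supp. intros a Ha Hp.
    apply stage_value_nonbidder, (supp_inactive act q a i (length_profile_active re n h a Hw Ha) Ei Hp).
Qed.

Lemma candidate_value sigma i (tstar : hist -> R) :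
  (forall h, tstar h = pstar rho c v s (nbids (actset h))) ->
  (forall j h, j <> i -> sigma j h = tstar h) ->
  forall K h, valid_hist re n h -> tv sigma i K h = u rho (W i h).
Proof.
  intros Ht Hs. apply (tval_invariant sigma i (valid_hist re n)).
  - apply valid_WF.
  - intros. eapply valid_step; eauto.
  - intros h Hv. apply candidate_stage_value; [eapply valid_WF; eauto |].
    intros j Hj. rewrite Hs; auto.
Qed.

Lemma candidate_SSPE (tstar : hist -> R) :
  (forall h, tstar h = pstar rho c v s (nbids (actset h))) ->
  SSPE re rho c v s n w0 tstar.
Proof.
  intros Ht. split.
  - intros h. rewrite Ht. pose proof (pstar_bounds rho c v s (nbids (actset h)) Hc Hcv Hr
      (nactive_ge2 re n h Hn)). lra.
  - intros h Hv i Hi d Hd x y Hx Hy.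
    assert (Hdev : forall j h', j <> i -> deviate (fun _ => tstar) i d j h' = tstar h').
    { intros j h' Hj. unfold deviate. apply Nat.eqb_neq in Hj. rewrite Hj. auto. }
    rewrite (conv_to_const _ _ x (fun K => candidate_value _ i tstar Ht Hdev K h Hv) Hx).
    rewrite (conv_to_const _ _ y (fun K => candidate_value _ i tstar Ht (fun _ _ _ => eq_refl) K h Hv) Hy).
    simpl; lra.
Qed.

Lemma nonbidder_value sigma i (Inv : hist -> Prop) :
  (forall h, Inv h -> WF n h) ->
  (forall h a, Inv h -> In a (profiles n) -> nbids a <> 1%nat ->
     prof_prob 0 (actset h) (fun j => sigma j h) a <> 0 -> Inv (h ++ [a])) ->
  (forall h a, Inv h -> In a (profiles (length (actset h))) ->
     prof_prob 0 (actset h) (fun j => sigma j h) a <> 0 -> nth i a false = false) ->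
  forall K h, Inv h -> tv sigma i K h = u rho (W i h).
Proof.
  intros Hwf Hcl Hz. apply tval_invariant; auto.
  intros h Hh. rewrite <- (Ex_const 0 (actset h) (fun j => sigma j h) (u rho (W i h))).
  apply Ex_ext_supp. intros a Ha Hp. apply stage_value_nonbidder; eauto.
Qed.

Lemma never_bid_value sigma i K h : WF n h ->
  tv (deviate sigma i (fun _ => 0)) i K h = u rho (W i h).
Proof.
  apply (nonbidder_value _ i (WF n)); auto.
  - intros h' a Hw Ha _ _. apply WF_app; auto. apply profiles_length; auto.
  - intros h' a Hw Ha Hp. destruct (nth i a false) eqn:E; auto. exfalso.
    apply (proj2 (supp_bidder _ 0 _ a i (length_profile_active re n h' a Hw Ha) Hp E)).
    simpl. unfold deviate. rewrite Nat.eqb_refl. auto.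
Qed.

Lemma inactive_value sigma i K h : WF n h -> nth i (actset h) false = false ->
  tv sigma i K h = u rho (W i h).
Proof.
  intros Hw Hi.
  apply (nonbidder_value _ i (fun h => WF n h /\ nth i (actset h) false = false)); [tauto | | | auto].
  - intros h' a [Hw' Hi'] Ha _ Hp. split; [apply WF_app; auto; apply profiles_length; auto |].
    rewrite active_app. apply next_active_inactive; auto.
    apply (supp_inactive _ _ a i (length_profile_active re n h' a Hw' ltac:(rewrite length_active; auto)) Hi' Hp).
  - intros h' a [Hw' Hi'] Ha Hp. apply (supp_inactive _ _ a i (length_profile_active re n h' a Hw' Ha) Hi' Hp).
Qed.

(** Each additional stage changes the truncated value
    of a player by at most the probability that the game ends in that stage
    times [E (W i h) * u (v - s)], so the truncated values converge in [ER]. *)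

Fixpoint surv (sigma : strat_profile) K h : R :=
  match K with
  | O => 1
  | S K' => sumR (fun a => prof_prob 0 (actset h) (fun j => sigma j h) a *
              (if (nbids a =? 1)%nat then 0 else surv sigma K' (h ++ [a]))) (profiles n)
  end.

Lemma surv_step sigma K h : WF n h ->
  surv sigma (S K) h =
  Ex 0 (actset h) (fun j => sigma j h)
     (fun a => if (nbids a =? 1)%nat then 0 else surv sigma K (h ++ [a])).
Proof. intros Hw. unfold Ex. rewrite length_active by auto. reflexivity. Qed.

Lemma surv_bounds sigma K h : probs_all sigma -> WF n h -> 0 <= surv sigma K h <= 1.
Proof.
  intros Hs. revert h; induction K; intros h Hh; [simpl; lra |].
  rewrite surv_step by auto.
  rewrite <- (Ex_const 0 (actset h) (fun j => sigma j h) 0) at 1.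
  rewrite <- (Ex_const 0 (actset h) (fun j => sigma j h) 1).
  split; apply Ex_le; try (intro; apply Hs); intros a Ha _;
    destruct (In_profiles_active re n h a Hh Ha);
    (destruct (nbids a =? 1)%nat; [lra |]); apply IHK, WF_app; auto.
Qed.

Lemma surv_dec sigma K h : probs_all sigma -> WF n h -> surv sigma (S K) h <= surv sigma K h.
Proof.
  intros Hs. revert h; induction K; intros h Hh.
  - pose proof (surv_bounds sigma 1 h Hs Hh). simpl surv at 2. lra.
  - rewrite (surv_step _ (S K)), surv_step by auto.
    apply Ex_le; [intro; apply Hs |]. intros a Ha _. destruct (In_profiles_active re n h a Hh Ha).
    destruct (nbids a =? 1)%nat; [lra |]. apply IHK, WF_app; auto.
Qed.

Lemma final_pay_le i h a : final_pay i h a <= u rho (W i h) + EE rho (W i h) * u rho (v - s).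
Proof.
  rewrite <- u_add. unfold final_pay. apply u_le; auto. destruct (nth i a false); lra.
Qed.

Lemma tval_diff_first sigma i h : probs_all sigma -> WF n h ->
  tv sigma i 1 h - tv sigma i 0 h <=
  EE rho (W i h) * u rho (v - s) * (surv sigma 0 h - surv sigma 1 h).
Proof.
  intros Hs Hw. rewrite tval_step, surv_step by auto. simpl tval. simpl surv.
  set (q := fun j => sigma j h). set (B := EE rho (W i h) * u rho (v - s)).
  rewrite <- (Ex_const 0 (actset h) q (u rho (W i h))), <- (Ex_const 0 (actset h) q 1) at 1.
  rewrite <- Ex_sub, <- Ex_sub, <- Ex_scal.
  apply Ex_le; [intro; apply Hs |]. intros a Ha _.
  destruct (nbids a =? 1)%nat.
  - pose proof (final_pay_le i h a). unfold B. lra.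
  - pose proof (u_le rho _ _ Hr (wealth_app_le c w0 i h a Hc)). lra.
Qed.

Lemma tval_diff sigma i K h : probs_all sigma -> WF n h ->
  tv sigma i (S K) h - tv sigma i K h <=
  EE rho (W i h) * u rho (v - s) * (surv sigma K h - surv sigma (S K) h).
Proof.
  intros Hs. assert (Hu : 0 < u rho (v - s)) by (apply u_pos; lra).
  revert h; induction K; intros h Hw; [apply tval_diff_first; auto |].
  rewrite (tval_step _ _ (S K)), tval_step, (surv_step _ (S K)), surv_step by auto.
  rewrite <- !Ex_sub, <- Ex_scal.
  apply Ex_le; [intro; apply Hs |]. intros a Ha _. destruct (In_profiles_active re n h a Hw Ha).
  destruct (nbids a =? 1)%nat; [lra |].
  assert (Hw' : WF n (h ++ [a])) by (apply WF_app; auto).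
  eapply Rle_trans; [apply IHK; auto |].
  apply Rmult_le_compat_r; [pose proof (surv_dec sigma K (h ++ [a]) Hs Hw'); lra |].
  apply Rmult_le_compat_r; [lra |]. apply EE_mono, wealth_app_le; auto.
Qed.

Lemma tval_converges sigma i h : probs_all sigma -> WF n h ->
  exists x, has_value re rho c v s n w0 sigma i h x.
Proof.
  intros Hs Hw. apply (conv_of_dominated_increments _ (fun K => surv sigma K h)
                         (EE rho (W i h) * u rho (v - s))).
  - apply Rmult_le_pos; [left; apply EE_pos | left; apply u_pos; lra].
  - intros; apply surv_bounds; auto.
  - intros; apply surv_dec; auto.
  - intros; apply tval_diff; auto.
Qed.

Lemma tval_ub sigma i K h : probs_all sigma -> WF n h -> tv sigma i K h <= u rho (W i h + (v - s)).
Proof.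
  intros Hs. revert h; induction K; intros h Hw.
  - simpl. apply u_le; auto; lra.
  - rewrite tval_step by auto.
    rewrite <- (Ex_const 0 (actset h) (fun j => sigma j h) (u rho (W i h + (v - s)))).
    apply Ex_le; [intro; apply Hs |]. intros a Ha _. destruct (In_profiles_active re n h a Hw Ha).
    destruct (nbids a =? 1)%nat.
    + unfold final_pay. apply u_le; auto. destruct (nth i a false); lra.
    + eapply Rle_trans; [apply IHK, WF_app; auto |].
      apply u_le; auto. pose proof (wealth_app_le c w0 i h a Hc); lra.
Qed.

Lemma tval_lb sigma i K h : probs_all sigma -> WF n h -> rho < 0 -> 1 / rho <= tv sigma i K h.
Proof.
  intros Hs Hw Hr'. revert h Hw; induction K; intros h Hw.
  - simpl. left; apply u_lb; auto.
  - rewrite tval_step by auto.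
    rewrite <- (Ex_const 0 (actset h) (fun j => sigma j h) (1 / rho)) at 1.
    apply Ex_le; [intro; apply Hs |]. intros a Ha _. destruct (In_profiles_active re n h a Hw Ha).
    destruct (nbids a =? 1)%nat; [left; apply u_lb; auto | apply IHK, WF_app; auto].
Qed.

(** The normalized gains of all players never exceed [u (v - s - c)]: at most
    one player wins, and fees only lower everybody's gains. *)

Lemma gn_final_pay j h a :
  gn rho (final_pay j h a) (W j h) = if nth j a false then u rho (v - s - c) else 0.
Proof. unfold final_pay. rewrite gn_u. destruct (nth j a false); auto. apply u_0. Qed.

Lemma surplus_bound sigma K h : probs_all sigma -> WF n h ->
  sumR (fun j => gn rho (tv sigma j K h) (W j h)) (seq 0 n) <= u rho (v - s - c).
Proof.
  intros Hs. assert (HU : 0 < u rho (v - s - c)) by (apply u_pos; lra).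
  revert h; induction K; intros h Hw.
  - simpl. rewrite (sumR_ext _ (fun _ => 0)) by (intros; apply gn_self). rewrite sumR_const0; lra.
  - rewrite (sumR_ext _ (fun j => Ex 0 (actset h) (fun k => sigma k h) (fun a => gn rho
       (if (nbids a =? 1)%nat then final_pay j h a else tv sigma j K (h ++ [a])) (W j h))))
      by (intros j _; rewrite tval_step by auto; apply gn_Ex).
    rewrite Ex_sum_swap, <- (Ex_const 0 (actset h) (fun k => sigma k h) (u rho (v - s - c))).
    apply Ex_le; [intro; apply Hs |]. intros a Ha _. destruct (In_profiles_active re n h a Hw Ha) as [Ha1 Ha2].
    destruct (nbids a =? 1)%nat eqn:E1.
    + rewrite (sumR_ext _ _ _ (fun j _ => gn_final_pay j h a)), <- Ha2, sumR_bidders.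
      apply Nat.eqb_eq in E1. rewrite E1. simpl; lra.
    + eapply Rle_trans; [| apply (IHK (h ++ [a])), WF_app; auto].
      apply sumR_le. intros j _. apply gn_antimono; auto; [apply wealth_app_le; auto |].
      intros; apply tval_lb; auto. apply WF_app; auto.
Qed.

Lemma tval_agree sigma sigma' i K h :
  (forall j h', (length h <= length h')%nat -> sigma j h' = sigma' j h') ->
  tv sigma i K h = tv sigma' i K h.
Proof.
  revert h; induction K; intros h H; [reflexivity |].
  simpl. apply sumR_ext. intros a _.
  rewrite (prob_ext_ge _ 0 (fun j => sigma j h) (fun j => sigma' j h)) by (intros; apply H; lia).
  f_equal. destruct (nbids a =? 1)%nat; auto. apply IHK.
  intros j h' Hl. apply H. rewrite length_app in Hl; simpl in Hl; lia.
Qed.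

Section Equilibrium.

Variable tau : hist -> R.
Hypothesis HS : SSPE re rho c v s n w0 tau.

Local Notation value i h x := (has_value re rho c v s n w0 (fun _ => tau) i h x).

Lemma tau_prob h : 0 <= tau h <= 1.
Proof. apply (proj1 HS). Qed.

Lemma tau_probs_ok h : probs_ok (fun _ : nat => tau h).
Proof. intros k. apply tau_prob. Qed.

Lemma tau_probs_all : probs_all (fun _ => tau).
Proof. apply probs_all_sym, (proj1 HS). Qed.

(** The equilibrium value of player [i] at [h] (a real number by [eqval_spec]). *)
Definition eqval (h : hist) (i : nat) : R := epsilon (inhabits 0) (fun y => value i h (Fin y)).

(** In equilibrium the value exists, is finite, and is at least the utility
    [u (W i h)] that never bidding again would guarantee. *)
Lemma eqval_spec h i : valid_hist re n h -> (i < n)%nat ->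
  value i h (Fin (eqval h i)) /\ u rho (W i h) <= eqval h i.
Proof.
  intros Hv Hi. assert (Hw : WF n h) by (eapply valid_WF; eauto).
  destruct (tval_converges (fun _ => tau) i h tau_probs_all Hw) as [x Hx].
  assert (H0 : has_value re rho c v s n w0 (deviate (fun _ => tau) i (fun _ => 0)) i h
                 (Fin (u rho (W i h)))).
  { unfold has_value. simpl. apply (Un_cv_ext (fun _ => u rho (W i h))); [| apply cv_const].
    intros; symmetry; apply never_bid_value; auto. }
  pose proof (proj2 HS h Hv i Hi (fun _ => 0) ltac:(intro; lra) _ x H0 Hx) as Hle.
  destruct x as [y |]; [| simpl in Hle; contradiction].
  assert (Hs : value i h (Fin (eqval h i))) by (unfold eqval; apply epsilon_spec; exists y; auto).
  split; auto.
  assert (eqval h i = y) by (apply (UL_sequence (fun K => tv (fun _ => tau) i K h)); auto).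
  simpl in Hle. lra.
Qed.

Lemma eqval_inactive h i : valid_hist re n h -> (i < n)%nat -> nth i (actset h) false = false ->
  eqval h i = u rho (W i h).
Proof.
  intros Hv Hi Ha. apply (UL_sequence _ _ _ (proj1 (eqval_spec h i Hv Hi))).
  apply (Un_cv_ext (fun _ => u rho (W i h))); [| apply cv_const].
  intros; symmetry; apply inactive_value; auto. eapply valid_WF; eauto.
Qed.

Definition gain (h : hist) (i : nat) : R := gn rho (eqval h i) (W i h).

Lemma gain_bounds h i : valid_hist re n h -> (i < n)%nat -> 0 <= gain h i <= u rho (v - s).
Proof.
  intros Hv Hi. destruct (eqval_spec h i Hv Hi) as [H1 H2]. unfold gain. split.
  - rewrite <- (gn_self rho (W i h)). apply gn_le; auto.
  - rewrite <- (gn_u rho (W i h) (v - s)). apply gn_le.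
    apply (cv_le_const _ _ _ H1). intros; apply tval_ub; [apply tau_probs_all | eapply valid_WF; eauto].
Qed.

Lemma gain_inactive h i : valid_hist re n h -> (i < n)%nat -> nth i (actset h) false = false ->
  gain h i = 0.
Proof. intros. unfold gain. rewrite eqval_inactive by auto. apply gn_self. Qed.

Lemma gain_surplus h : valid_hist re n h ->
  sumR (fun j => gain h j) (seq 0 n) <= u rho (v - s - c).
Proof.
  intros Hv.
  apply (cv_le_const (fun K => sumR (fun j => gn rho (tv (fun _ => tau) j K h) (W j h)) (seq 0 n))).
  - apply cv_sumR. intros j Hj. apply in_seq in Hj.
    destruct (eqval_spec h j Hv ltac:(lia)) as [H1 _].
    unfold gain, gn. apply CV_mult; [apply CV_minus; [exact H1 | apply cv_const] | apply cv_const].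
  - intros K. apply surplus_bound; [apply tau_probs_all | eapply valid_WF; eauto].
Qed.

Definition cont_value (h : hist) (i : nat) (a : profile) : R :=
  if (nbids a =? 1)%nat then final_pay i h a else eqval (h ++ [a]) i.

Lemma cont_value_limit h i q : valid_hist re n h -> (i < n)%nat ->
  Un_cv (fun K => Ex 0 (actset h) q
           (fun a => if (nbids a =? 1)%nat then final_pay i h a else tv (fun _ => tau) i K (h ++ [a])))
        (Ex 0 (actset h) q (cont_value h i)).
Proof.
  intros Hv Hi. apply Ex_cv. intros a Ha Hp. unfold cont_value.
  destruct (In_profiles_active re n h a (valid_WF _ _ _ Hv) Ha) as [Ha1 Ha2].
  destruct (nbids a =? 1)%nat eqn:E; [apply cv_const |]. apply Nat.eqb_neq in E.
  apply (eqval_spec (h ++ [a]) i); auto. eapply valid_step; eauto.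
Qed.

Lemma eqval_mixture h i : valid_hist re n h -> (i < n)%nat ->
  eqval h i =
  tau h * Ex 0 (actset h) (upd (fun _ => tau h) i 1) (cont_value h i) +
  (1 - tau h) * Ex 0 (actset h) (upd (fun _ => tau h) i 0) (cont_value h i).
Proof.
  intros Hv Hi. assert (Hw : WF n h) by (eapply valid_WF; eauto).
  apply (UL_sequence (fun K => tv (fun _ => tau) i K h)); [apply (eqval_spec h i Hv Hi) |].
  apply cv_shift1. eapply Un_cv_ext.
  2: { apply CV_plus; apply CV_mult;
       [apply cv_const | apply cont_value_limit; auto | apply cv_const | apply cont_value_limit; auto]. }
  intros K. cbv beta. rewrite tval_step by auto.
  symmetry; exact (Ex_split 0 (actset h) (fun _ => tau h) _ i).
Qed.

Definition one_shot (h : hist) (x : R) : hist -> R :=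
  fun h' => if list_eq_dec (list_eq_dec Bool.bool_dec) h' h then x else tau h'.

Lemma one_shot_deviation h i x : valid_hist re n h -> (i < n)%nat -> 0 <= x <= 1 ->
  Ex 0 (actset h) (upd (fun _ => tau h) i x) (cont_value h i) <= eqval h i.
Proof.
  intros Hv Hi Hx. assert (Hw : WF n h) by (eapply valid_WF; eauto).
  set (sB := deviate (fun _ => tau) i (one_shot h x)).
  assert (Hsame : forall h', h' <> h -> forall j, sB j h' = tau h').
  { intros h' Hne j. unfold sB, deviate, one_shot. destruct (j =? i)%nat; auto.
    destruct (list_eq_dec (list_eq_dec Bool.bool_dec) h' h); congruence. }
  assert (HB : has_value re rho c v s n w0 sB i h
                 (Fin (Ex 0 (actset h) (upd (fun _ => tau h) i x) (cont_value h i)))).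
  { unfold has_value; simpl. apply cv_shift1.
    eapply Un_cv_ext; [| apply cont_value_limit; auto].
    intros K. cbv beta. rewrite tval_step by auto. unfold Ex. apply sumR_ext. intros a _.
    rewrite (prob_ext_ge _ 0 (fun j => sB j h) (upd (fun _ => tau h) i x)).
    2: { intros k _. unfold sB, deviate, upd, one_shot. destruct (k =? i)%nat; auto.
         destruct (list_eq_dec (list_eq_dec Bool.bool_dec) h h); congruence. }
    f_equal. destruct (nbids a =? 1)%nat; auto.
    apply tval_agree. intros j h' Hl. symmetry. apply Hsame.
    intros ->. rewrite length_app in Hl; simpl in Hl; lia. }
  assert (Hd : is_strategy (one_shot h x)).
  { intro h'; unfold one_shot. destruct (list_eq_dec (list_eq_dec Bool.bool_dec) h' h); auto.
    apply tau_prob. }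
  exact (proj2 HS h Hv i Hi (one_shot h x) Hd _ _ HB (proj1 (eqval_spec h i Hv Hi))).
Qed.

Local Notation U := (u rho (v - s - c)).
Local Notation d := (u rho (- c)).

Definition bid_gain (h : hist) (i : nat) : R :=
  gn rho (Ex 0 (actset h) (upd (fun _ => tau h) i 1) (cont_value h i)) (W i h).
Definition pass_gain (h : hist) (i : nat) : R :=
  gn rho (Ex 0 (actset h) (upd (fun _ => tau h) i 0) (cont_value h i)) (W i h).

Lemma gain_decomposition h i : valid_hist re n h -> (i < n)%nat ->
  gain h i = tau h * bid_gain h i + (1 - tau h) * pass_gain h i /\
  bid_gain h i <= gain h i /\ pass_gain h i <= gain h i.
Proof.
  intros Hv Hi. unfold gain, bid_gain, pass_gain. repeat split.
  - rewrite (eqval_mixture h i Hv Hi). unfold gn. field. apply Rgt_not_eq, EE_pos.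
  - apply gn_le, one_shot_deviation; auto; lra.
  - apply gn_le, one_shot_deviation; auto; lra.
Qed.

Lemma bid_cont_gain h i a : nth i a false = true ->
  gn rho (cont_value h i a) (W i h) =
  if (nbids a =? 1)%nat then U else d + EE rho (- c) * gain (h ++ [a]) i.
Proof.
  intros Ea. unfold cont_value. destruct (nbids a =? 1)%nat.
  - rewrite gn_final_pay, Ea. reflexivity.
  - rewrite (gn_shift rho _ _ c). unfold gain. rewrite wealth_app, Ea. reflexivity.
Qed.

Lemma pass_cont_gain h i a : nth i a false = false ->
  gn rho (cont_value h i a) (W i h) =
  if (nbids a =? 1)%nat then 0 else gain (h ++ [a]) i.
Proof.
  intros Ea. unfold cont_value. destruct (nbids a =? 1)%nat.
  - rewrite gn_final_pay, Ea. reflexivity.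
  - unfold gain. rewrite wealth_app, Ea, Rminus_0_r. reflexivity.
Qed.

Lemma cont_gain_bounds h i x a M : valid_hist re n h -> (i < n)%nat -> 0 <= x <= 1 ->
  (forall h' j, valid_hist re n h' -> (j < n)%nat -> gain h' j <= M) ->
  In a (profiles (length (actset h))) -> (nbids a =? 1)%nat = false ->
  prof_prob 0 (actset h) (upd (fun _ => tau h) i x) a <> 0 ->
  0 <= gain (h ++ [a]) i <= M.
Proof.
  intros Hv Hi Hx HM Ha E Hp.
  destruct (In_profiles_active re n h a (valid_WF _ _ _ Hv) Ha) as [Ha1 Ha2].
  apply Nat.eqb_neq in E. assert (Hv' : valid_hist re n (h ++ [a])) by (eapply valid_step; eauto).
  split; [apply gain_bounds | apply HM]; auto.
Qed.

(** Bidding wins with probability [pi = (1 - tau h)^k], [k] the number of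
    opponents; otherwise the fee is lost and a non-negative gain follows. *)
Lemma bid_gain_lower h i : valid_hist re n h -> (i < n)%nat -> nth i (actset h) false = true ->
  let pi := (1 - tau h) ^ (nbids (actset h) - 1) in
  pi * U + (1 - pi) * d <= bid_gain h i.
Proof.
  intros Hv Hi Ha pi. unfold bid_gain. rewrite gn_Ex.
  replace (pi * U + (1 - pi) * d) with
    (Ex 0 (actset h) (upd (fun _ => tau h) i 1) (fun a => (U - d) * ind1 a + d * 1))
    by (rewrite Ex_lin, Ex_const, Ex_ind1_bidder by auto; unfold pi; ring).
  apply Ex_le; [apply probs_ok_upd; [apply tau_probs_ok | lra] |]. intros a Ha' Hp.
  pose proof (supp_upd1 _ _ a i (length_profile_active re n h a (valid_WF _ _ _ Hv) Ha') Ha Hp) as Ea.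
  rewrite bid_cont_gain by auto. unfold ind1. destruct (nbids a =? 1)%nat eqn:E; [lra |].
  destruct (cont_gain_bounds h i 1 a (u rho (v - s)) Hv Hi ltac:(lra)
              (fun h' j Hv' Hj => proj2 (gain_bounds h' j Hv' Hj)) Ha' E Hp).
  pose proof (Rmult_le_pos _ _ (Rlt_le _ _ (EE_pos rho (- c))) H). unfold profile in *. lra.
Qed.

(** With all gains at most [M], bidding gains at most the prize when winning
    and [d + M] otherwise. *)
Lemma bid_gain_upper h i M : valid_hist re n h -> (i < n)%nat -> nth i (actset h) false = true ->
  (forall h' j, valid_hist re n h' -> (j < n)%nat -> gain h' j <= M) ->
  let pi := (1 - tau h) ^ (nbids (actset h) - 1) in
  bid_gain h i <= pi * U + (1 - pi) * (d + M).
Proof.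
  intros Hv Hi Ha HM pi. unfold bid_gain. rewrite gn_Ex.
  replace (pi * U + (1 - pi) * (d + M)) with
    (Ex 0 (actset h) (upd (fun _ => tau h) i 1) (fun a => (U - d - M) * ind1 a + (d + M) * 1))
    by (rewrite Ex_lin, Ex_const, Ex_ind1_bidder by auto; unfold pi; ring).
  apply Ex_le; [apply probs_ok_upd; [apply tau_probs_ok | lra] |]. intros a Ha' Hp.
  pose proof (supp_upd1 _ _ a i (length_profile_active re n h a (valid_WF _ _ _ Hv) Ha') Ha Hp) as Ea.
  rewrite bid_cont_gain by auto. unfold ind1. destruct (nbids a =? 1)%nat eqn:E; [lra |].
  destruct (cont_gain_bounds h i 1 a M Hv Hi ltac:(lra) HM Ha' E Hp).
  assert (EE rho (- c) * gain (h ++ [a]) i <= 1 * M); [| unfold profile in *; lra].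
  apply Rmult_le_compat; [left; apply EE_pos | auto | apply EE_neg_le1 | ]; auto.
Qed.

(** Passing yields no gain if exactly one opponent bids, which happens with
    probability [r = k tau (1 - tau)^(k-1)], and a gain at most [M] otherwise. *)
Lemma pass_gain_upper h i M : valid_hist re n h -> (i < n)%nat -> nth i (actset h) false = true ->
  (forall h' j, valid_hist re n h' -> (j < n)%nat -> gain h' j <= M) ->
  let k := (nbids (actset h) - 1)%nat in
  pass_gain h i <= (1 - INR k * tau h * (1 - tau h) ^ pred k) * M.
Proof.
  intros Hv Hi Ha HM k. unfold pass_gain. rewrite gn_Ex.
  replace ((1 - INR k * tau h * (1 - tau h) ^ pred k) * M) with
    (Ex 0 (actset h) (upd (fun _ => tau h) i 0) (fun a => (- M) * ind1 a + M * 1))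
    by (rewrite Ex_lin, Ex_const, Ex_ind1_passer by auto; unfold k; ring).
  apply Ex_le; [apply probs_ok_upd; [apply tau_probs_ok | lra] |]. intros a Ha' Hp.
  pose proof (supp_upd0 _ _ a i (length_profile_active re n h a (valid_WF _ _ _ Hv) Ha') Hp) as Ea.
  rewrite pass_cont_gain by auto. unfold ind1. destruct (nbids a =? 1)%nat eqn:E; [lra |].
  pose proof (cont_gain_bounds h i 0 a M Hv Hi ltac:(lra) HM Ha' E Hp). unfold profile in *. lra.
Qed.

Lemma gain_round_bound M : 0 <= M ->
  (forall h' j, valid_hist re n h' -> (j < n)%nat -> gain h' j <= M) ->
  forall h j, valid_hist re n h -> (j < n)%nat ->
  gain h j <= M + d / 2 \/ gain h j <= (1 - rho0 U d n) * M.
Proof.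
  intros HM0 HM h j Hv Hj.
  assert (HU : 0 < U) by (apply u_pos; lra). assert (Hd : d < 0) by (apply u_neg; lra).
  assert (Hla : length (actset h) = n) by (apply length_active, (valid_WF re); auto).
  pose proof (rho0_bounds U d n HU Hd ltac:(lia)).
  destruct (nth j (actset h) false) eqn:Ea.
  2: { right. rewrite gain_inactive by auto. apply Rmult_le_pos; lra. }
  pose proof (nactive_ge2 re n h Hn) as H2.
  destruct (exists_two_true_entries _ H2) as [j1 [j2 [Hne [Hj1 [Hj2 [Ha1 Ha2]]]]]].
  rewrite Hla in Hj1, Hj2.
  (* two active players each gain at least what bidding guarantees, and share at most [U] *)
  assert (Hshare : 2 * ((1 - tau h) ^ (nbids (actset h) - 1) * U +
                        (1 - (1 - tau h) ^ (nbids (actset h) - 1)) * d) <= U).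
  { pose proof (bid_gain_lower h j1 Hv Hj1 Ha1). pose proof (bid_gain_lower h j2 Hv Hj2 Ha2).
    pose proof (proj1 (proj2 (gain_decomposition h j1 Hv Hj1))).
    pose proof (proj1 (proj2 (gain_decomposition h j2 Hv Hj2))).
    pose proof (gain_surplus h Hv).
    pose proof (sumR_ge_two_terms (fun j => gain h j) (seq 0 n) j1 j2
      ltac:(intros z Hz; apply in_seq in Hz; apply gain_bounds; auto; lia) Hne
      ltac:(apply in_seq; lia) ltac:(apply in_seq; lia)). cbv zeta in *. lra. }
  destruct (gain_decomposition h j Hv Hj) as [Hmix [HB HN]].
  pose proof (nbids_le_length (actset h)).
  apply (contraction U d M (tau h) (gain h j) (bid_gain h j) (pass_gain h j)
           (nbids (actset h) - 1) n); auto; try lia.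
  - apply tau_prob.
  - apply bid_gain_upper; auto.
  - apply pass_gain_upper; auto.
Qed.

(** Hence the supremum of all gains is non-positive: every equilibrium
    gain is zero. *)
Lemma gains_vanish h j : valid_hist re n h -> (j < n)%nat -> gain h j = 0.
Proof.
  set (A := fun g => exists h j, valid_hist re n h /\ (j < n)%nat /\ g = gain h j).
  destruct (completeness A) as [M [HMub HMl]].
  { exists (u rho (v - s)). intros g [h' [j' [Hv [Hj ->]]]]. apply gain_bounds; auto. }
  { exists (gain [] 0), [], 0%nat. split; [exact I | split; [lia | reflexivity]]. }
  assert (HM : forall h j, valid_hist re n h -> (j < n)%nat -> gain h j <= M).
  { intros h' j' Hv Hj. apply HMub. exists h', j'; auto. }
  assert (HM0 : 0 <= M).
  { pose proof (gain_bounds [] 0 I ltac:(lia)). pose proof (HM [] 0%nat I ltac:(lia)). lra. }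
  assert (HU : 0 < U) by (apply u_pos; lra). assert (Hd : d < 0) by (apply u_neg; lra).
  pose proof (rho0_bounds U d n HU Hd ltac:(lia)).
  assert (HMb : M <= Rmax (M + d / 2) ((1 - rho0 U d n) * M)).
  { apply HMl. intros g [h' [j' [Hv [Hj ->]]]].
    destruct (gain_round_bound M HM0 HM h' j' Hv Hj) as [H1 | H1];
      eapply Rle_trans; [exact H1 | apply Rmax_l | exact H1 | apply Rmax_r]. }
  assert (M <= 0).
  { apply Rnot_lt_le. intros HMpos. revert HMb. apply Rlt_not_le, Rmax_lub_lt; [lra | nra]. }
  intros Hv Hj. pose proof (HM h j Hv Hj). pose proof (gain_bounds h j Hv Hj). lra.
Qed.

Lemma equilibrium_value h i : valid_hist re n h -> (i < n)%nat ->
  value i h (Fin (u rho (W i h))).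
Proof.
  intros Hv Hi. destruct (eqval_spec h i Hv Hi) as [H1 _].
  rewrite <- (gn_zero rho (eqval h i) (W i h)); auto. apply gains_vanish; auto.
Qed.

Lemma indifference_prob pi : pi * U + (1 - pi) * d = 0 -> pi = xr rho c v s.
Proof.
  intros H0.
  assert (HU : U = d + EE rho (- c) * u rho (v - s)) by (rewrite <- u_add; f_equal; ring).
  assert (Hd : 0 = d + EE rho (- c) * u rho c).
  { rewrite <- u_add. replace (- c + c) with 0 by ring. symmetry; apply u_0. }
  unfold xr. pose proof (EE_pos rho (- c)). pose proof (u_pos rho (v - s) Hr ltac:(lra)).
  apply Rmult_eq_reg_r with (EE rho (- c) * u rho (v - s)); [| nra].
  field_simplify; [| lra]. nra.
Qed.

Lemma equilibrium_strategy h : valid_hist re n h ->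
  tau h = pstar rho c v s (nbids (actset h)) /\ 0 < tau h < 1.
Proof.
  intros Hv. assert (HU : 0 < U) by (apply u_pos; lra). assert (Hd : d < 0) by (apply u_neg; lra).
  assert (Hla : length (actset h) = n) by (apply length_active, (valid_WF re); auto).
  pose proof (nactive_ge2 re n h Hn) as H2.
  destruct (exists_true_entry (actset h) ltac:(lia)) as [i [Hi Ha]]. rewrite Hla in Hi.
  assert (HM0 : forall h' j, valid_hist re n h' -> (j < n)%nat -> gain h' j <= 0)
    by (intros; rewrite gains_vanish; auto; lra).
  pose proof (bid_gain_lower h i Hv Hi Ha) as Hlo.
  pose proof (bid_gain_upper h i 0 Hv Hi Ha HM0) as Hup.
  pose proof (pass_gain_upper h i 0 Hv Hi Ha HM0) as HN.
  cbv zeta in Hlo, Hup, HN. rewrite Rplus_0_r in Hup. rewrite Rmult_0_r in HN.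
  destruct (gain_decomposition h i Hv Hi) as [Hmix [HB _]].
  rewrite gains_vanish in Hmix, HB by auto.
  destruct (indifference_forces_mixing U d (tau h) (bid_gain h i) (pass_gain h i)
              (nbids (actset h) - 1) HU Hd ltac:(lia) (tau_prob h) ltac:(lra) HB HN
              ltac:(lra)) as [Hp HB0].
  split; auto. apply pstar_unique; [auto | lra |].
  apply indifference_prob. lra.
Qed.

End Equilibrium.

End Game.

Lemma sspe_characterization re n v c s rho w0 :
  (2 <= n)%nat -> 0 < c -> c < v - s -> rho <= 0 ->
  (forall tstar, (forall h, tstar h = pstar rho c v s (nactive re n h)) ->
     SSPE re rho c v s n w0 tstar) /\
  forall tau, SSPE re rho c v s n w0 tau ->
    (forall h, valid_hist re n h -> forall i, (i < n)%nat ->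
       has_value re rho c v s n w0 (fun _ => tau) i h (Fin (u rho (wealth c w0 i h)))) /\
    (forall h, valid_hist re n h ->
       tau h = pstar rho c v s (nactive re n h) /\ 0 < tau h < 1).
Proof.
  intros Hn Hc Hcv Hr. split.
  - intros tstar Ht. apply candidate_SSPE; auto.
  - intros tau HS. split.
    + intros h Hv i Hi. apply equilibrium_value; auto.
    + exact (equilibrium_strategy re rho c v s n w0 Hc Hcv Hr Hn tau HS).
Qed.

Theorem theorem1 (n : nat) (v c s rho : R) (w0 : nat -> R) :
  (2 <= n)%nat -> 0 < v -> 0 < c -> 0 <= s -> c < v - s -> rho <= 0 ->
  (* with re-entry *)
  (SSPE true rho c v s n w0 (fun _ => pstar rho c v s n) /\
   forall tau, SSPE true rho c v s n w0 tau ->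
     (forall h, valid_hist true n h -> forall i, (i < n)%nat ->
        has_value true rho c v s n w0 (fun _ => tau) i h
          (Fin (u rho (wealth c w0 i h)))) /\
     (forall h, valid_hist true n h ->
        tau h = pstar rho c v s n /\ 0 < tau h < 1)) /\
  (* without re-entry *)
  (SSPE false rho c v s n w0 (fun h => pstar rho c v s (nactive false n h)) /\
   forall tau, SSPE false rho c v s n w0 tau ->
     (forall h, valid_hist false n h -> forall i, (i < n)%nat ->
        has_value false rho c v s n w0 (fun _ => tau) i h
          (Fin (u rho (wealth c w0 i h)))) /\
     (forall h, valid_hist false n h ->
        tau h = pstar rho c v s (nactive false n h) /\ 0 < tau h < 1)).
Proof.
  intros Hn _ Hc _ Hcv Hr.
  destruct (sspe_characterization true n v c s rho w0 Hn Hc Hcv Hr) as [Hcand Hsspe].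
  destruct (sspe_characterization false n v c s rho w0 Hn Hc Hcv Hr) as [Hcand' Hsspe'].
  split; split; auto.
  (* with re-entry all [n] players stay active *)
  - apply Hcand. intros h. unfold nactive. rewrite nactive_reentry. reflexivity.
  - intros tau HS. destruct (Hsspe tau HS) as [Hval Hstrat]. split; auto.
    intros h Hv. rewrite <- (nactive_reentry n h). apply Hstrat; auto.
Qed.
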